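(* Under the standing assumptions and with the sets of the context: (1) the sets $a,b\subset X\times X$ belong to the $\sigma$-algebra $\mathcal A(X\times X)$ generated by analytic sets, and for every analytic $A\subset X$ the sets $a(A),b(A)$ belong to $\mathcal A(X)$; (2) $a\cap b\cap(\mathcal T_e\times X)=\emptyset$; (3) for $x\in\mathcal T$, each of $a(x)$, $b(x)$ is either empty or a singleton; (4) $a(\mathcal T)=a(\mathcal T_e)$ and $b(\mathcal T)=b(\mathcal T_e)$; (5) $\mathcal T_e=\mathcal T\cup a(\mathcal T)\cup b(\mathcal T)$ and $\mathcal T\cap(a(\mathcal T)\cup b(\mathcal T))=\emptyset$.
   Context: Standing assumptions: $(X,d)$ Polish; $d_L:X\times X\to[0,+\infty]$ a Borel ($d\times d$) distance, possibly $+\infty$-valued; $(X,d_L)$ geodesic (points at finite distance are joined by a curve of $d_L$-length equal to their distance) and non-branching (for $r\ge0$, $d_L(x,y)=r/2$ implies $\{z:d_L(x,z)=r\}\cap\{z:d_L(y,z)=r/2\}$ has at most one point); geodesics are $d$-continuous and locally compact in $(X,d)$ (for each geodesic $\gamma$ and point $x$ on it, $\gamma^{-1}(\bar B_r(x))$ is compact for some $r>0$). Transport setting: $\mu,\nu$ Borel probabilities, $\pi$ a coupling with finite $d_L$-cost concentrated on a $\sigma$-compact $d_L$-cyclically monotone $\Gamma\subset\{d_L<\infty\}$. $\Gamma'$: pairs $(x,y)$ such that there exist $I\ge0$, $(w_i,z_i)\in\Gamma$, $w_0=x$, $z_I=y$, $w_{I+1}:=w_0$, $\sum_{i=0}^I(d_L(w_{i+1},z_i)-d_L(w_i,z_i))=0$.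 $G:=\{(x,y):\exists(w,z)\in\Gamma',\ d_L(w,x)+d_L(x,y)+d_L(y,z)=d_L(w,z)\}$, $G(x):=\{y:(x,y)\in G\}$, $G^{-1}:=\{(x,y):(y,x)\in G\}$, $G^{-1}(x):=\{y:(x,y)\in G^{-1}\}$. $\mathcal T:=P_1(G^{-1}\setminus\{x=y\})\cap P_1(G\setminus\{x=y\})$, $\mathcal T_e:=P_1(G^{-1}\setminus\{x=y\})\cup P_1(G\setminus\{x=y\})$. Endpoint graphs: $a:=\{(x,y)\in G^{-1}: G^{-1}(y)\setminus\{y\}=\emptyset\}$, $b:=\{(x,y)\in G: G(y)\setminus\{y\}=\emptyset\}$; for $x\in X$, $a(x):=\{y:(x,y)\in a\}$, and for $A\subset X$, $a(A):=\bigcup_{x\in A}a(x)$; similarly for $b$. *)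

From Stdlib Require Import Reals List.
From Stdlib Require Export Rtopology.
Open Scope R_scope.

Inductive ER : Type := Fin (r : R) | PInf.

Definition er_add (a b : ER) : ER :=
  match a, b with Fin x, Fin y => Fin (x + y) | _, _ => PInf end.

Definition er_le (a b : ER) : Prop :=
  match a, b with
  | _, PInf => True
  | PInf, Fin _ => False
  | Fin x, Fin y => x <= y
  end.

(* finite sums over indices 0 .. n-1 *)
Fixpoint rsum (f : nat -> R) (n : nat) : R :=
  match n with O => 0 | S k => rsum f k + f k end.
Fixpoint ersum (f : nat -> ER) (n : nat) : ER :=
  match n with O => Fin 0 | S k => er_add (ersum f k) (f k) end.

Definition is_metric {T : Type} (d : T -> T -> R) : Prop :=
  (forall x y, 0 <= d x y) /\ (forall x y, d x y = 0 <-> x = y) /\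
  (forall x y, d x y = d y x) /\ (forall x y z, d x z <= d x y + d y z).

Definition complete_metric {T : Type} (d : T -> T -> R) : Prop :=
  forall u : nat -> T,
    (forall eps, eps > 0 -> exists N, forall m n, (N <= m)%nat -> (N <= n)%nat -> d (u m) (u n) < eps) ->
    exists l, forall eps, eps > 0 -> exists N, forall n, (N <= n)%nat -> d (u n) l < eps.

Definition countable_set {T : Type} (D : T -> Prop) : Prop :=
  exists f : nat -> option T, (forall n x, f n = Some x -> D x) /\
                              (forall x, D x -> exists n, f n = Some x).

Definition separable_metric {T : Type} (d : T -> T -> R) : Prop :=
  exists D : T -> Prop, countable_set D /\
    forall x eps, eps > 0 -> exists y, D y /\ d x y < eps.

Definition polish {T : Type} (d : T -> T -> R) : Prop :=
  is_metric d /\ complete_metric d /\ separable_metric d.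

(* product metric on T * T (induces the product topology) *)
Definition pdist {T : Type} (d : T -> T -> R) (p q : T * T) : R :=
  Rmax (d (fst p) (fst q)) (d (snd p) (snd q)).

Definition open_d {T : Type} (d : T -> T -> R) (U : T -> Prop) : Prop :=
  forall x, U x -> exists eps, eps > 0 /\ forall y, d x y < eps -> U y.

Definition compact_d {T : Type} (d : T -> T -> R) (K : T -> Prop) : Prop :=
  forall (I : Type) (U : I -> T -> Prop),
    (forall i, open_d d (U i)) -> (forall x, K x -> exists i, U i x) ->
    exists l : list I, forall x, K x -> exists i, In i l /\ U i x.

Definition sigma_compact {T : Type} (d : T -> T -> R) (S : T -> Prop) : Prop :=
  exists K : nat -> T -> Prop, (forall n, compact_d d (K n)) /\
    forall x, S x <-> exists n, K n x.

Inductive sigma_gen {T : Type} (F : (T -> Prop) -> Prop) : (T -> Prop) -> Prop :=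
| sg_base : forall A, F A -> sigma_gen F A
| sg_full : sigma_gen F (fun _ => True)
| sg_compl : forall A, sigma_gen F A -> sigma_gen F (fun x => ~ A x)
| sg_union : forall A : nat -> T -> Prop, (forall n, sigma_gen F (A n)) ->
    sigma_gen F (fun x => exists n, A n x)
| sg_ext : forall A B, sigma_gen F A -> (forall x, A x <-> B x) -> sigma_gen F B.

Definition borel {T : Type} (d : T -> T -> R) : (T -> Prop) -> Prop :=
  sigma_gen (open_d d).

Definition baire_continuous {T : Type} (d : T -> T -> R) (f : (nat -> nat) -> T) : Prop :=
  forall s eps, eps > 0 -> exists n, forall t,
    (forall i, (i < n)%nat -> t i = s i) -> d (f s) (f t) < eps.

Definition analytic {T : Type} (d : T -> T -> R) (A : T -> Prop) : Prop :=
  (forall x, ~ A x) \/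
  exists f : (nat -> nat) -> T, baire_continuous d f /\
    forall x, A x <-> exists s, f s = x.

Definition sigma_analytic {T : Type} (d : T -> T -> R) : (T -> Prop) -> Prop :=
  sigma_gen (analytic d).

Definition is_ext_distance {X : Type} (dL : X -> X -> ER) : Prop :=
  (forall x y r, dL x y = Fin r -> 0 <= r) /\
  (forall x y, dL x y = Fin 0 <-> x = y) /\
  (forall x y, dL x y = dL y x) /\
  (forall x y z, er_le (dL x z) (er_add (dL x y) (dL y z))).

Definition borel_ext_fun {X : Type} (d : X -> X -> R) (dL : X -> X -> ER) : Prop :=
  forall r : R, borel (pdist d) (fun p => er_le (dL (fst p) (snd p)) (Fin r)).

Definition is_geodesic {X : Type} (dL : X -> X -> ER) (g : R -> X) : Prop :=
  exists D : R, dL (g 0) (g 1) = Fin D /\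
    forall s t, 0 <= s <= 1 -> 0 <= t <= 1 -> dL (g s) (g t) = Fin (Rabs (t - s) * D).

Definition geodesic_space {X : Type} (dL : X -> X -> ER) : Prop :=
  forall x y r, dL x y = Fin r ->
    exists g, is_geodesic dL g /\ g 0 = x /\ g 1 = y.

Definition non_branching {X : Type} (dL : X -> X -> ER) : Prop :=
  forall x y r, 0 <= r -> dL x y = Fin (r / 2) ->
    forall z1 z2, dL x z1 = Fin r -> dL y z1 = Fin (r / 2) ->
                  dL x z2 = Fin r -> dL y z2 = Fin (r / 2) -> z1 = z2.

Definition geodesics_d_continuous {X : Type} (d : X -> X -> R) (dL : X -> X -> ER) : Prop :=
  forall g, is_geodesic dL g -> forall t, 0 <= t <= 1 ->
    forall eps, eps > 0 -> exists delta, delta > 0 /\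
      forall s, 0 <= s <= 1 -> Rabs (s - t) < delta -> d (g s) (g t) < eps.

Definition geodesics_locally_compact {X : Type} (d : X -> X -> R) (dL : X -> X -> ER) : Prop :=
  forall g, is_geodesic dL g -> forall t, 0 <= t <= 1 ->
    exists r, r > 0 /\ compact (fun s => 0 <= s <= 1 /\ d (g s) (g t) <= r).

Definition is_prob_measure {T : Type} (M : (T -> Prop) -> Prop) (m : (T -> Prop) -> R) : Prop :=
  (forall A, M A -> 0 <= m A) /\ m (fun _ => True) = 1 /\
  forall A : nat -> T -> Prop, (forall n, M (A n)) ->
    (forall i j x, i <> j -> A i x -> A j x -> False) ->
    Un_cv (fun n => rsum (fun k => m (A k)) (S n)) (m (fun x => exists n, A n x)).

Definition is_coupling {X : Type} (d : X -> X -> R) (mu nu : (X -> Prop) -> R)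
  (pi : (X * X -> Prop) -> R) : Prop :=
  forall A, borel d A ->
    pi (fun p => A (fst p)) = mu A /\ pi (fun p => A (snd p)) = nu A.

(* finite integral of d_L against pi: sup of integrals of nonnegative simple
   functions below d_L is finite *)
Definition finite_cost {X : Type} (d : X -> X -> R) (dL : X -> X -> ER)
  (pi : (X * X -> Prop) -> R) : Prop :=
  exists C : R, forall (n : nat) (A : nat -> X * X -> Prop) (c : nat -> R),
    (forall i, (i < n)%nat -> borel (pdist d) (A i)) ->
    (forall i j p, (i < n)%nat -> (j < n)%nat -> i <> j -> A i p -> A j p -> False) ->
    (forall i, (i < n)%nat -> 0 <= c i /\ forall p, A i p -> er_le (Fin (c i)) (dL (fst p) (snd p))) ->
    rsum (fun i => c i * pi (A i)) n <= C.

Definition concentrated_on {X : Type} (d : X -> X -> R) (pi : (X * X -> Prop) -> R)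
  (S : X * X -> Prop) : Prop :=
  exists B, borel (pdist d) B /\ (forall p, B p -> S p) /\ pi B = 1.

Definition cyclically_monotone {X : Type} (dL : X -> X -> ER) (Gam : X * X -> Prop) : Prop :=
  forall (n : nat) (x y : nat -> X),
    (forall i, (i <= n)%nat -> Gam (x i, y i)) ->
    let x' := fun i => if Nat.eqb i (S n) then x O else x i in
    er_le (ersum (fun i => dL (x i) (y i)) (S n))
          (ersum (fun i => dL (x' (S i)) (y i)) (S n)).

Definition er_val (a : ER) : R := match a with Fin r => r | PInf => 0 end.

(* Gamma': the sum has the finite terms d_L(w_i,z_i) (pairs in Gamma) and the
   terms d_L(w_{i+1},z_i); it equals 0 iff the latter are all finite and the
   real sum vanishes. *)
Definition Gprime {X : Type} (dL : X -> X -> ER) (Gam : X * X -> Prop) (x y : X) : Prop :=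
  exists (I : nat) (w z : nat -> X),
    (forall i, (i <= I)%nat -> Gam (w i, z i)) /\ w O = x /\ z I = y /\
    let w' := fun i => if Nat.eqb i (S I) then w O else w i in
    (forall i, (i <= I)%nat -> dL (w' (S i)) (z i) <> PInf) /\
    rsum (fun i => er_val (dL (w' (S i)) (z i)) - er_val (dL (w i) (z i))) (S I) = 0.

Definition Grel {X : Type} (dL : X -> X -> ER) (Gam : X * X -> Prop) (x y : X) : Prop :=
  exists w z, Gprime dL Gam w z /\
    er_add (er_add (dL w x) (dL x y)) (dL y z) = dL w z.

(* T = P1(G^{-1} \ diag) ∩ P1(G \ diag),  T_e = the union *)
Definition Tset {X : Type} (dL : X -> X -> ER) (Gam : X * X -> Prop) (x : X) : Prop :=
  (exists y, Grel dL Gam y x /\ x <> y) /\ (exists y, Grel dL Gam x y /\ x <> y).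
Definition Teset {X : Type} (dL : X -> X -> ER) (Gam : X * X -> Prop) (x : X) : Prop :=
  (exists y, Grel dL Gam y x /\ x <> y) \/ (exists y, Grel dL Gam x y /\ x <> y).

(* a = {(x,y) in G^{-1} : G^{-1}(y) \ {y} = empty},  b = {(x,y) in G : G(y) \ {y} = empty} *)
Definition aset {X : Type} (dL : X -> X -> ER) (Gam : X * X -> Prop) (x y : X) : Prop :=
  Grel dL Gam y x /\ forall z, Grel dL Gam z y -> z = y.
Definition bset {X : Type} (dL : X -> X -> ER) (Gam : X * X -> Prop) (x y : X) : Prop :=
  Grel dL Gam x y /\ forall z, Grel dL Gam y z -> z = y.

Definition rimg {X : Type} (r : X -> X -> Prop) (A : X -> Prop) (y : X) : Prop :=
  exists x, A x /\ r x y.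

(* Parts (2)-(5) follow from the definitions and two geometric facts.  A ray
   segment [G u v] with [u <> v] has a geodesic midpoint, which lies in [T].
   Through a point of [T], two ray segments ending at points of [a] (or of [b])
   coincide: cyclical monotonicity forces consecutive ray pieces to concatenate
   geodesically, and non-branching then forbids two distinct continuations.
   Part (1) is descriptive set theory: [Gprime] and [G] are projections of
   Borel conditions on countably many points of the analytic set [Gam], hence
   analytic, and [a], [b] and their images are differences of analytic sets.
   Analytic sets are handled through their parametrisations by the Baire
   space [nat -> nat]. *)

From Stdlib Require Import Reals List Lra Lia Classical ClassicalEpsilon FunctionalExtensionality Cantor ZArith.
Open Scope R_scope.

(** * Analytic sets through the Baire space *)

Definition baire := nat -> nat.

Definition agree (n : nat) (s t : baire) : Prop := forall i, (i < n)%nat -> s i = t i.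

Definition baire_cont (f : baire -> baire) : Prop :=
  forall s k, exists n, forall t, agree n s t -> agree k (f s) (f t).

Definition baire_analytic (S : baire -> Prop) : Prop :=
  (forall s, ~ S s) \/ exists f, baire_cont f /\ forall s, S s <-> exists t, f t = s.

Definition baire_closed (S : baire -> Prop) : Prop :=
  forall s, ~ S s -> exists n, forall t, agree n s t -> ~ S t.

Lemma agree_refl n s : agree n s s.
Proof. intros i _; reflexivity. Qed.

Lemma agree_sym n s t : agree n s t -> agree n t s.
Proof. intros H i Hi; symmetry; auto. Qed.

Lemma agree_trans n s t u : agree n s t -> agree n t u -> agree n s u.
Proof. intros H1 H2 i Hi; rewrite H1; auto. Qed.

Lemma agree_le n m s t : (m <= n)%nat -> agree n s t -> agree m s t.
Proof. intros Hm H i Hi; apply H; lia. Qed.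

Lemma baire_cont_id : baire_cont (fun s => s).
Proof. intros s k; exists k; auto. Qed.

Lemma baire_cont_comp f g : baire_cont f -> baire_cont g -> baire_cont (fun s => f (g s)).
Proof.
  intros Hf Hg s k. destruct (Hf (g s) k) as [n Hn]. destruct (Hg s n) as [m Hm].
  exists m; intros t Ht; apply Hn, Hm, Ht.
Qed.

Lemma baire_analytic_ext S S' :
  baire_analytic S -> (forall s, S s <-> S' s) -> baire_analytic S'.
Proof.
  intros [H|[f [Hf H]]] E; [left; intros s Hs; apply (H s), E, Hs|].
  right; exists f; split; auto; intros s; rewrite <- E; auto.
Qed.

Lemma baire_analytic_image S f :
  baire_analytic S -> baire_cont f -> baire_analytic (fun x => exists s, S s /\ f s = x).
Proof.
  intros [H|[g [Hg HS]]] Hf.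
  - left; intros x [s [Hs _]]; apply (H s Hs).
  - right; exists (fun s => f (g s)); split; [apply baire_cont_comp; auto|].
    intros x; split.
    + intros [s [Hs <-]]. apply HS in Hs as [t <-]. eauto.
    + intros [t <-]. exists (g t); split; auto. apply HS; eauto.
Qed.

Lemma baire_continuous_comp {T} (d : T -> T -> R) f g :
  baire_continuous d f -> baire_cont g -> baire_continuous d (fun s => f (g s)).
Proof.
  intros Hf Hg s eps He. destruct (Hf (g s) eps He) as [n Hn].
  destruct (Hg s n) as [m Hm]. exists m; intros t Ht.
  apply Hn, (agree_sym n (g s) (g t)), Hm, (agree_sym m t s); exact Ht.
Qed.

Lemma analytic_of_baire_image {T} (d : T -> T -> R) S f :
  baire_analytic S -> baire_continuous d f -> analytic d (fun x => exists s, S s /\ f s = x).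
Proof.
  intros [H|[g [Hg HS]]] Hf.
  - left; intros x [s [Hs _]]; apply (H s Hs).
  - right; exists (fun s => f (g s)); split; [apply baire_continuous_comp; auto|].
    intros x; split.
    + intros [s [Hs <-]]. apply HS in Hs as [t <-]. eauto.
    + intros [t <-]. exists (g t); split; auto. apply HS; eauto.
Qed.

(* A retraction of the Baire space onto a nonempty closed set [C]: the [n]-th
   prefix copies [s] as long as it still extends to a point of [C], and
   otherwise jumps to such a point. *)
Section ClosedRetraction.
Variable C : baire -> Prop.
Variable s0 : baire.
Hypothesis Cs0 : C s0.
Hypothesis HC : baire_closed C.

Definition extendable (n : nat) (p : baire) : Prop := exists u, C u /\ agree n p u.

Definition baire_upd (p : baire) (n v : nat) : baire :=
  fun i => if Nat.eqb i n then v else p i.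

Definition retr_next (s : baire) (n : nat) (p : baire) : baire :=
  if excluded_middle_informative (extendable (S n) (baire_upd p n (s n)))
  then baire_upd p n (s n)
  else epsilon (inhabits s0) (fun u => C u /\ agree n p u).

Fixpoint retr_prefix (s : baire) (n : nat) : baire :=
  match n with O => (fun _ => O) | S m => retr_next s m (retr_prefix s m) end.

Definition retraction (s : baire) : baire := fun i => retr_prefix s (S i) i.

Lemma retr_prefix_extendable s n : extendable n (retr_prefix s n).
Proof.
  induction n as [|n IH]; simpl.
  - exists s0; split; auto; intros i Hi; lia.
  - unfold retr_next. destruct (excluded_middle_informative _) as [H|H]; auto.
    pose proof (epsilon_spec (inhabits s0) (fun u => C u /\ agree n (retr_prefix s n) u) IH)
      as [H1 _].
    eexists; split; [exact H1|apply agree_refl].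
Qed.

Lemma retr_prefix_step s n : agree n (retr_prefix s n) (retr_prefix s (S n)).
Proof.
  simpl; unfold retr_next. destruct (excluded_middle_informative _) as [H|H].
  - intros i Hi; unfold baire_upd. destruct (Nat.eqb_spec i n); [lia|auto].
  - apply (epsilon_spec (inhabits s0) (fun u => C u /\ agree n (retr_prefix s n) u)),
      retr_prefix_extendable.
Qed.

Lemma retr_prefix_stable s n k : agree n (retr_prefix s n) (retr_prefix s (n + k)).
Proof.
  induction k as [|k IH]; [rewrite Nat.add_0_r; apply agree_refl|].
  rewrite Nat.add_succ_r. eapply agree_trans; [apply IH|].
  eapply agree_le; [|apply retr_prefix_step]; lia.
Qed.

Lemma retraction_prefix s n : agree n (retraction s) (retr_prefix s n).
Proof.
  intros i Hi; unfold retraction.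
  pose proof (retr_prefix_stable s (S i) (n - S i)) as H.
  replace (S i + (n - S i))%nat with n in H by lia. apply H; lia.
Qed.

Lemma retraction_in s : C (retraction s).
Proof.
  apply NNPP; intros Hn. destruct (HC _ Hn) as [n Hn'].
  destruct (retr_prefix_extendable s n) as [u [Hu Ha]]. apply (Hn' u); auto.
  eapply agree_trans; [apply retraction_prefix|exact Ha].
Qed.

Lemma retr_prefix_local s t n : agree n s t -> retr_prefix s n = retr_prefix t n.
Proof.
  induction n as [|n IH]; intros H; simpl; auto.
  rewrite IH by (eapply agree_le; [|apply H]; lia).
  unfold retr_next. rewrite (H n) by lia. reflexivity.
Qed.

Lemma retraction_cont : baire_cont retraction.
Proof.
  intros s k; exists k; intros t H i Hi. unfold retraction.
  rewrite (retr_prefix_local s t (S i)); auto.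
  eapply agree_le; [|apply H]; lia.
Qed.

Lemma retraction_id s : C s -> retraction s = s.
Proof.
  intros Hs. assert (A : forall n, agree n (retr_prefix s n) s).
  { induction n as [|n IH]; [intros i Hi; lia|]. simpl; unfold retr_next.
    assert (U : agree (S n) (baire_upd (retr_prefix s n) n (s n)) s).
    { intros i Hi; unfold baire_upd. destruct (Nat.eqb_spec i n); [subst; auto|apply IH; lia]. }
    destruct (excluded_middle_informative _) as [H|H]; [exact U|].
    exfalso; apply H; exists s; split; auto. }
  extensionality i. rewrite (retraction_prefix s (S i) i) by lia. apply A; lia.
Qed.
End ClosedRetraction.

Lemma baire_closed_analytic C : baire_closed C -> baire_analytic C.
Proof.
  intros HC. destruct (classic (exists s, C s)) as [[s0 Hs0]|Hn].
  - right; exists (retraction C s0); split; [apply retraction_cont|].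
    intros s; split; [intros Hs; exists s; apply retraction_id; auto|].
    intros [t <-]; apply retraction_in; auto.
  - left; intros s Hs; apply Hn; eauto.
Qed.

Definition baire_proj (n : nat) (s : baire) : baire := fun k => s (to_nat (n, k)).

Definition baire_join (t : nat -> baire) : baire :=
  fun m => let (n, k) := of_nat m in t n k.

Lemma baire_proj_join t n : baire_proj n (baire_join t) = t n.
Proof. extensionality k; unfold baire_proj, baire_join; rewrite cancel_of_to; auto. Qed.

Fixpoint pair_code_bound (n K : nat) : nat :=
  match K with O => O | S K' => Nat.max (pair_code_bound n K') (S (to_nat (n, K'))) end.

Lemma pair_code_bound_spec n K k : (k < K)%nat -> (to_nat (n, k) < pair_code_bound n K)%nat.
Proof.
  induction K as [|K IH]; intros H; [lia|]. simpl.
  destruct (Nat.eq_dec k K); apply Nat.max_lt_iff; [subst; right; lia|left; apply IH; lia].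
Qed.

Lemma baire_cont_proj n : baire_cont (baire_proj n).
Proof.
  intros s k; exists (pair_code_bound n k); intros t H i Hi.
  apply H, pair_code_bound_spec, Hi.
Qed.

Definition baire_cons (n : nat) (t : baire) : baire :=
  fun i => match i with O => n | S j => t j end.

Definition baire_shift (s : baire) : baire := fun i => s (S i).

Lemma nonempty_reindex {Y} (F : nat -> Y -> Prop) :
  (exists n y, F n y) ->
  exists idx : nat -> nat,
    (forall n, exists y, F (idx n) y) /\ (forall n, (exists y, F n y) -> idx n = n).
Proof.
  intros [n0 [y0 H0]].
  exists (fun n => if excluded_middle_informative (exists y, F n y) then n else n0).
  split; intros n; destruct (excluded_middle_informative _); eauto; tauto.
Qed.

Lemma baire_analytic_union (F : nat -> baire -> Prop) :
  (forall n, baire_analytic (F n)) -> baire_analytic (fun s => exists n, F n s).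
Proof.
  intros HF. destruct (classic (exists n s, F n s)) as [Hne|Hn].
  2:{ left; intros s [n Hs]; apply Hn; eauto. }
  destruct (nonempty_reindex F Hne) as [idx [Hidx Hid]].
  assert (Hpar : forall n, exists f, baire_cont f /\
                   forall s, F (idx n) s <-> exists t, f t = s).
  { intros n. destruct (HF (idx n)) as [H|H]; [|exact H].
    destruct (Hidx n) as [s Hs]; exfalso; exact (H s Hs). }
  destruct (choice _ Hpar) as [f Hf].
  right; exists (fun s => f (s O) (baire_shift s)); split.
  - intros s k. destruct (proj1 (Hf (s O)) (baire_shift s) k) as [n Hn].
    exists (S n); intros t Ht. rewrite <- (Ht O) by lia.
    apply Hn; intros i Hi; apply Ht; lia.
  - intros s; split.
    + intros [n Hs]. rewrite <- (Hid n) in Hs by eauto.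
      apply (proj2 (Hf n)) in Hs as [t Ht]. exists (baire_cons n t); exact Ht.
    + intros [t <-]. exists (idx (t O)). apply (proj2 (Hf (t O))); eauto.
Qed.

(* A countable intersection is parametrised by the codes [s] whose components
   all have the same image, a closed condition. *)
Lemma baire_analytic_inter (F : nat -> baire -> Prop) :
  (forall n, baire_analytic (F n)) -> baire_analytic (fun s => forall n, F n s).
Proof.
  intros HF. destruct (classic (exists s, forall n, F n s)) as [[x0 Hx0]|Hn].
  2:{ left; intros s Hs; apply Hn; eauto. }
  assert (Hpar : forall n, exists f, baire_cont f /\ forall s, F n s <-> exists t, f t = s).
  { intros n. destruct (HF n) as [H|H]; [exfalso; exact (H x0 (Hx0 n))|exact H]. }
  destruct (choice _ Hpar) as [f Hf].
  set (E := fun s => forall n, f n (baire_proj n s) = f O (baire_proj O s)).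
  assert (HE : baire_closed E).
  { intros s Hs. apply not_all_ex_not in Hs as [n Hn].
    assert (Hk : exists k, f n (baire_proj n s) k <> f O (baire_proj O s) k).
    { apply NNPP; intros Hk; apply Hn; extensionality k.
      apply NNPP; intros Hk'; apply Hk; eauto. }
    destruct Hk as [k Hk].
    destruct (baire_cont_comp _ _ (proj1 (Hf n)) (baire_cont_proj n) s (S k)) as [N1 H1].
    destruct (baire_cont_comp _ _ (proj1 (Hf O)) (baire_cont_proj O) s (S k)) as [N2 H2].
    exists (Nat.max N1 N2); intros t Ht HEt. apply Hk.
    rewrite (H1 t (agree_le _ _ _ _ (Nat.le_max_l _ _) Ht) k) by lia.
    rewrite (H2 t (agree_le _ _ _ _ (Nat.le_max_r _ _) Ht) k) by lia. rewrite (HEt n); auto. }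
  eapply baire_analytic_ext.
  - apply (baire_analytic_image E (fun s => f O (baire_proj O s)));
      [apply baire_closed_analytic, HE|].
    apply baire_cont_comp; [apply (Hf O)|apply baire_cont_proj].
  - intros x; split.
    + intros [s [Hs <-]] n. rewrite <- (Hs n). apply (Hf n). eauto.
    + intros Hx. assert (Ht : forall n, exists t, f n t = x) by (intros n; apply (Hf n), Hx).
      destruct (choice _ Ht) as [t Ht'].
      exists (baire_join t). unfold E; split.
      * intros n; rewrite !baire_proj_join, !Ht'; auto.
      * rewrite baire_proj_join; auto.
Qed.

Definition baire_bianalytic (P : baire -> Prop) : Prop :=
  baire_analytic P /\ baire_analytic (fun s => ~ P s).

Lemma bianalytic_ext P Q : baire_bianalytic P -> (forall s, P s <-> Q s) -> baire_bianalytic Q.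
Proof.
  intros [H1 H2] E; split; [apply (baire_analytic_ext _ _ H1); auto|].
  apply (baire_analytic_ext _ _ H2). intros s; specialize (E s); tauto.
Qed.

Lemma bianalytic_compl P : baire_bianalytic P -> baire_bianalytic (fun s => ~ P s).
Proof.
  intros [H1 H2]; split; auto. eapply baire_analytic_ext; [apply H1|].
  intros s; split; [tauto|apply NNPP].
Qed.

Lemma bianalytic_union (P : nat -> baire -> Prop) :
  (forall n, baire_bianalytic (P n)) -> baire_bianalytic (fun s => exists n, P n s).
Proof.
  intros H; split; [apply baire_analytic_union; intros n; apply H|].
  eapply baire_analytic_ext; [apply (baire_analytic_inter (fun n s => ~ P n s)); intros n; apply H|].
  intros s; split; [intros Hn [n Hs]; apply (Hn n Hs)|intros Hn n Hs; apply Hn; eauto].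
Qed.

Lemma bianalytic_inter (P : nat -> baire -> Prop) :
  (forall n, baire_bianalytic (P n)) -> baire_bianalytic (fun s => forall n, P n s).
Proof.
  intros H. eapply bianalytic_ext.
  - apply bianalytic_compl, (bianalytic_union (fun n s => ~ P n s)).
    intros n; apply bianalytic_compl, H.
  - intros s; split; [intros Hn n; apply NNPP; intros Hc; apply Hn; eauto|].
    intros Hn [n Hs]; apply Hs, Hn.
Qed.

Lemma bianalytic_full : baire_bianalytic (fun _ => True).
Proof.
  split; [right; exists (fun s => s); split; [apply baire_cont_id|]; intros s; split; eauto|].
  left; intros s Hs; apply Hs; auto.
Qed.

Lemma bianalytic_empty : baire_bianalytic (fun _ => False).
Proof. eapply bianalytic_ext; [apply bianalytic_compl, bianalytic_full|]. tauto. Qed.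

Lemma bianalytic_or P Q :
  baire_bianalytic P -> baire_bianalytic Q -> baire_bianalytic (fun s => P s \/ Q s).
Proof.
  intros HP HQ.
  eapply bianalytic_ext; [apply (bianalytic_union (fun n => match n with O => P | _ => Q end))|].
  - intros [|n]; auto.
  - intros s; split; [intros [[|n] H]; auto|intros [H|H]; [exists O|exists 1%nat]; auto].
Qed.

Lemma bianalytic_and P Q :
  baire_bianalytic P -> baire_bianalytic Q -> baire_bianalytic (fun s => P s /\ Q s).
Proof.
  intros HP HQ.
  eapply bianalytic_ext; [apply (bianalytic_inter (fun n => match n with O => P | _ => Q end))|].
  - intros [|n]; auto.
  - intros s; split; [intros H; split; [apply (H O)|apply (H 1%nat)]|intros [H1 H2] [|n]; auto].
Qed.

Lemma bianalytic_impl (P : Prop) Q : baire_bianalytic Q -> baire_bianalytic (fun s => P -> Q s).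
Proof.
  intros HQ. destruct (classic P) as [H|H].
  - eapply bianalytic_ext; [apply HQ|]. intros s; tauto.
  - eapply bianalytic_ext; [apply bianalytic_full|]. intros s; tauto.
Qed.

Lemma bianalytic_preimage_sigma {T} (F : (T -> Prop) -> Prop) (h : baire -> T) :
  (forall A, F A -> baire_bianalytic (fun s => A (h s))) ->
  forall U, sigma_gen F U -> baire_bianalytic (fun s => U (h s)).
Proof.
  intros HF U HU; induction HU.
  - apply HF; auto.
  - apply bianalytic_full.
  - apply bianalytic_compl; auto.
  - apply (bianalytic_union (fun n s => A n (h s))); auto.
  - eapply bianalytic_ext; [apply IHHU|]. intros s; apply H.
Qed.

(* The preimage of an open set is the union over [n] of the sets of codes all
   of whose length-[n] continuations map into it; each of these is clopen. *)
Lemma bianalytic_preimage_open {T} (d : T -> T -> R) (h : baire -> T) U :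
  baire_continuous d h -> open_d d U -> baire_bianalytic (fun s => U (h s)).
Proof.
  intros Hh HU.
  set (O := fun n s => forall t, agree n s t -> U (h t)).
  eapply bianalytic_ext; [apply (bianalytic_union O)|].
  - intros n; split; apply baire_closed_analytic.
    + intros s Hs. exists n. intros t Ht Ho. apply Hs. intros u Hu. apply Ho.
      eapply agree_trans; [apply agree_sym, Ht|auto].
    + intros s Hs. apply NNPP in Hs. exists n. intros t Ht Ho. apply Ho. intros u Hu.
      apply Hs. eapply agree_trans; eauto.
  - intros s; split.
    + intros [n Hn]. apply Hn, agree_refl.
    + intros Hs. destruct (HU _ Hs) as [eps [He Hb]]. destruct (Hh s eps He) as [n Hn].
      exists n; intros t Ht. apply Hb, Hn, agree_sym, Ht.
Qed.

Lemma bianalytic_preimage_borel {T} (d : T -> T -> R) (h : baire -> T) U :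
  baire_continuous d h -> borel d U -> baire_bianalytic (fun s => U (h s)).
Proof.
  intros Hh HU; apply (bianalytic_preimage_sigma (open_d d)); auto.
  intros A HA; apply (bianalytic_preimage_open d); auto.
Qed.

Lemma analytic_ext {T} (d : T -> T -> R) A B :
  analytic d A -> (forall x, A x <-> B x) -> analytic d B.
Proof.
  intros [H|[f [Hf H]]] E; [left; intros x Hx; apply (H x), E, Hx|].
  right; exists f; split; auto; intros x; rewrite <- E; auto.
Qed.

Lemma analytic_inter_borel {T} (d : T -> T -> R) A U :
  analytic d A -> borel d U -> analytic d (fun x => A x /\ U x).
Proof.
  intros [HA|[f [Hf HA]]] HU; [left; intros x [H _]; apply (HA x H)|].
  destruct (bianalytic_preimage_borel d f U Hf HU) as [Hg _].
  eapply analytic_ext; [apply (analytic_of_baire_image d _ f Hg Hf)|].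
  intros x; split.
  - intros [s [Hs <-]]; split; auto; apply HA; eauto.
  - intros [Hx Hu]; apply HA in Hx as [s <-]; eauto.
Qed.

Definition metric_cont {T U} (d : T -> T -> R) (d' : U -> U -> R) (f : T -> U) : Prop :=
  forall x eps, eps > 0 ->
    exists delta, delta > 0 /\ forall y, d x y < delta -> d' (f x) (f y) < eps.

Lemma baire_continuous_metric_comp {T U} (d : T -> T -> R) (d' : U -> U -> R) f g :
  baire_continuous d f -> metric_cont d d' g -> baire_continuous d' (fun s => g (f s)).
Proof.
  intros Hf Hg s eps He. destruct (Hg (f s) eps He) as [dl [Hd H]].
  destruct (Hf s dl Hd) as [n Hn]. exists n; intros t Ht; apply H, Hn, Ht.
Qed.

Lemma analytic_image {T U} (d : T -> T -> R) (d' : U -> U -> R) A g :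
  analytic d A -> metric_cont d d' g -> analytic d' (fun y => exists x, A x /\ g x = y).
Proof.
  intros [H|[f [Hf HA]]] Hg; [left; intros y [x [Hx _]]; apply (H x Hx)|].
  right; exists (fun s => g (f s)); split; [apply (baire_continuous_metric_comp d); auto|].
  intros y; split.
  - intros [x [Hx <-]]. apply HA in Hx as [s <-]; eauto.
  - intros [s <-]. exists (f s); split; auto. apply HA; eauto.
Qed.

Lemma analytic_union {T} (d : T -> T -> R) (A : nat -> T -> Prop) :
  (forall n, analytic d (A n)) -> analytic d (fun x => exists n, A n x).
Proof.
  intros HA. destruct (classic (exists n x, A n x)) as [Hne|Hn].
  2:{ left; intros x [n Hx]; apply Hn; eauto. }
  destruct (nonempty_reindex A Hne) as [idx [Hidx Hid]].
  assert (Hpar : forall n, exists f, baire_continuous d f /\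
                   forall x, A (idx n) x <-> exists s, f s = x).
  { intros n. destruct (HA (idx n)) as [H|H]; [|exact H].
    destruct (Hidx n) as [x Hx]; exfalso; exact (H x Hx). }
  destruct (choice _ Hpar) as [f Hf].
  right; exists (fun s => f (s O) (baire_shift s)); split.
  - intros s eps He. destruct (proj1 (Hf (s O)) (baire_shift s) eps He) as [n Hn].
    exists (S n); intros t Ht. rewrite (Ht O) by lia.
    apply Hn; intros i Hi; apply Ht; lia.
  - intros x; split.
    + intros [n Hx]. rewrite <- (Hid n) in Hx by eauto.
      apply (proj2 (Hf n)) in Hx as [t Ht]. exists (baire_cons n t); exact Ht.
    + intros [t <-]. exists (idx (t O)). apply (proj2 (Hf (t O))); eauto.
Qed.

Lemma metric_pos {T} (d : T -> T -> R) x y : is_metric d -> x <> y -> 0 < d x y.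
Proof.
  intros [H0 [H1 _]] Hn. destruct (H0 x y) as [H|H]; auto. exfalso; apply Hn, H1; auto.
Qed.

Definition baire_join2 (s t : baire) : baire :=
  baire_join (fun n => match n with O => s | _ => t end).

Lemma baire_proj0_join2 s t : baire_proj 0 (baire_join2 s t) = s.
Proof. apply baire_proj_join. Qed.

Lemma baire_proj1_join2 s t : baire_proj 1 (baire_join2 s t) = t.
Proof. apply baire_proj_join. Qed.

Lemma baire_closed_eq {T} (d : T -> T -> R) f g :
  is_metric d -> baire_continuous d f -> baire_continuous d g ->
  baire_closed (fun s => f s = g s).
Proof.
  intros Hm Hf Hg s Hs. pose proof (metric_pos d _ _ Hm Hs) as Hp.
  destruct (Hf s (d (f s) (g s) / 2) ltac:(lra)) as [n1 H1].
  destruct (Hg s (d (f s) (g s) / 2) ltac:(lra)) as [n2 H2].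
  exists (Nat.max n1 n2). intros t Ht Heq.
  assert (A1 := H1 t (fun i Hi => eq_sym (Ht i ltac:(lia)))).
  assert (A2 := H2 t (fun i Hi => eq_sym (Ht i ltac:(lia)))).
  destruct Hm as [_ [_ [Hsym Htri]]]. rewrite Heq in A1.
  specialize (Htri (f s) (g t) (g s)). rewrite (Hsym (g t) (g s)) in Htri. lra.
Qed.

(* [A /\ C] is parametrised by the pairs of codes of [A] and [C] with the same
   image, a closed set of codes. *)
Lemma analytic_and {T} (d : T -> T -> R) A C :
  is_metric d -> analytic d A -> analytic d C -> analytic d (fun x => A x /\ C x).
Proof.
  intros Hm [H|[f [Hf HA]]]; [left; intros x [Hx _]; apply (H x Hx)|].
  intros [H|[g [Hg HC]]]; [left; intros x [_ Hx]; apply (H x Hx)|].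
  assert (Hf0 : baire_continuous d (fun s => f (baire_proj 0 s)))
    by (apply baire_continuous_comp; auto; apply baire_cont_proj).
  assert (Hg1 : baire_continuous d (fun s => g (baire_proj 1 s)))
    by (apply baire_continuous_comp; auto; apply baire_cont_proj).
  eapply analytic_ext.
  - apply (analytic_of_baire_image d _ _ (baire_closed_analytic _ (baire_closed_eq d _ _ Hm Hf0 Hg1)) Hf0).
  - intros x; split.
    + intros [s [Hs <-]]; split; [apply HA; eauto|rewrite Hs; apply HC; eauto].
    + intros [Ha Hc]. apply HA in Ha as [s Hs]. apply HC in Hc as [t Ht].
      exists (baire_join2 s t); rewrite baire_proj0_join2, baire_proj1_join2; split; congruence.
Qed.

Lemma pdist_fst {T} (d : T -> T -> R) p q : d (fst p) (fst q) <= pdist d p q.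
Proof. apply Rmax_l. Qed.

Lemma pdist_snd {T} (d : T -> T -> R) p q : d (snd p) (snd q) <= pdist d p q.
Proof. apply Rmax_r. Qed.

Lemma baire_continuous_pair {X} (d : X -> X -> R) f g :
  baire_continuous d f -> baire_continuous d g ->
  baire_continuous (pdist d) (fun s => (f s, g s)).
Proof.
  intros Hf Hg s eps He. destruct (Hf s eps He) as [n1 H1]. destruct (Hg s eps He) as [n2 H2].
  exists (Nat.max n1 n2); intros t Ht. unfold pdist; simpl.
  apply Rmax_lub_lt; [apply H1|apply H2]; intros i Hi; apply Ht; lia.
Qed.

Lemma analytic_prod {T} (d : T -> T -> R) A C :
  analytic d A -> analytic d C -> analytic (pdist d) (fun p => A (fst p) /\ C (snd p)).
Proof.
  intros [H|[f [Hf HA]]]; [left; intros x [Hx _]; apply (H _ Hx)|].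
  intros [H|[g [Hg HC]]]; [left; intros x [_ Hx]; apply (H _ Hx)|].
  right; exists (fun s => (f (baire_proj 0 s), g (baire_proj 1 s))); split.
  - apply baire_continuous_pair; apply baire_continuous_comp; auto; apply baire_cont_proj.
  - intros [x y]; simpl; split.
    + intros [Ha Hc]. apply HA in Ha as [s Hs]. apply HC in Hc as [t Ht].
      exists (baire_join2 s t); rewrite baire_proj0_join2, baire_proj1_join2; congruence.
    + intros [s E]; inversion E; split; [apply HA|apply HC]; eauto.
Qed.

Lemma half_pow_pos n : 0 < (/2)^n.
Proof. apply pow_lt; lra. Qed.

Lemma half_pow_S n : (/2)^(S n) = (/2)^n / 2.
Proof. simpl; field. Qed.

Lemma half_pow_le n m : (n <= m)%nat -> (/2)^m <= (/2)^n.
Proof.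
  intros H. replace m with (n + (m - n))%nat by lia. generalize (m - n)%nat as k.
  induction k as [|k IH]; [rewrite Nat.add_0_r; lra|].
  rewrite Nat.add_succ_r, half_pow_S. pose proof (half_pow_pos (n + k)). lra.
Qed.

Lemma half_pow_small eps : eps > 0 -> exists N, forall n, (N <= n)%nat -> (/2)^n < eps.
Proof.
  intros He. destruct (pow_lt_1_zero (/2) ltac:(rewrite Rabs_right; lra) eps He) as [N HN].
  exists N; intros n Hn. specialize (HN n Hn). rewrite Rabs_right in HN; auto.
  left; apply half_pow_pos.
Qed.

Lemma Rle_of_le_plus_eps a b : (forall eps, eps > 0 -> a <= b + eps) -> a <= b.
Proof. intros H. apply Rnot_lt_le; intros Hl. specialize (H ((a - b)/2) ltac:(lra)). lra. Qed.

(* Lusin's parametrisation of a nonempty Polish space: a code [s] is retracted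
   onto the closed set of index sequences along which the dense sequence [pt]
   is 2^-n-Cauchy, and then sent to the limit. *)
Section PolishParametrisation.
Variable X : Type.
Variable d : X -> X -> R.
Hypothesis Hp : polish d.
Variable x0 : X.
Variable pt : nat -> X.
Hypothesis Hpt : forall x eps, eps > 0 -> exists n, d x (pt n) < eps.

Let Hm : is_metric d := proj1 Hp.

Let dsym x y : d x y = d y x.
Proof. apply (proj1 (proj2 (proj2 Hm))). Qed.
Let dtri x y z : d x z <= d x y + d y z.
Proof. apply (proj2 (proj2 (proj2 Hm))). Qed.
Let dself x : d x x = 0.
Proof. apply (proj1 (proj2 Hm)); auto. Qed.

Definition fast_cauchy (s : baire) : Prop :=
  forall n, d (pt (s n)) (pt (s (S n))) < (/2)^n.

Lemma fast_cauchy_closed : baire_closed fast_cauchy.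
Proof.
  intros s Hs. apply not_all_ex_not in Hs as [n Hn]. exists (S (S n)). intros t Ht Hv.
  apply Hn. rewrite (Ht n), (Ht (S n)) by lia. apply Hv.
Qed.

Lemma fast_cauchy_const : fast_cauchy (fun _ => O).
Proof. intros n; rewrite dself; apply half_pow_pos. Qed.

Lemma fast_cauchy_tail s : fast_cauchy s -> forall n j,
  d (pt (s n)) (pt (s (n + j)%nat)) <= 2 * (/2)^n - 2 * (/2)^(n + j).
Proof.
  intros Hv n j; induction j as [|j IH].
  - rewrite Nat.add_0_r, dself; lra.
  - rewrite Nat.add_succ_r. eapply Rle_trans; [apply (dtri _ (pt (s (n + j)%nat)))|].
    specialize (Hv (n + j)%nat). rewrite half_pow_S. lra.
Qed.

Lemma fast_cauchy_tail_le s : fast_cauchy s -> forall n m, (n <= m)%nat ->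
  d (pt (s n)) (pt (s m)) <= 2 * (/2)^n - 2 * (/2)^m.
Proof.
  intros Hv n m Hnm. replace m with (n + (m - n))%nat by lia.
  apply fast_cauchy_tail, Hv.
Qed.

Definition converges (u : nat -> X) (l : X) : Prop :=
  forall eps, eps > 0 -> exists N, forall n, (N <= n)%nat -> d (u n) l < eps.

Definition fast_lim (s : baire) : X := epsilon (inhabits x0) (converges (fun n => pt (s n))).

Lemma fast_lim_spec s : fast_cauchy s -> converges (fun n => pt (s n)) (fast_lim s).
Proof.
  intros Hv. unfold fast_lim; apply epsilon_spec, (proj1 (proj2 Hp)).
  intros eps He. destruct (half_pow_small (eps/2) ltac:(lra)) as [N HN].
  exists N; intros m n Hm' Hn.
  destruct (Nat.le_ge_cases m n) as [Hl|Hl].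
  - pose proof (fast_cauchy_tail_le s Hv m n Hl). specialize (HN m Hm').
    pose proof (half_pow_pos n). lra.
  - pose proof (fast_cauchy_tail_le s Hv n m Hl). specialize (HN n Hn).
    pose proof (half_pow_pos m). rewrite dsym. lra.
Qed.

Lemma fast_lim_close s : fast_cauchy s -> forall n, d (pt (s n)) (fast_lim s) <= 2 * (/2)^n.
Proof.
  intros Hv n. apply Rle_of_le_plus_eps; intros eps He.
  destruct (fast_lim_spec s Hv eps He) as [N HN].
  specialize (HN (Nat.max N n) ltac:(lia)).
  pose proof (fast_cauchy_tail_le s Hv n (Nat.max N n) ltac:(lia)).
  pose proof (dtri (pt (s n)) (pt (s (Nat.max N n))) (fast_lim s)).
  pose proof (half_pow_pos (Nat.max N n)). lra.
Qed.

Definition polish_param (s : baire) : X :=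
  fast_lim (retraction fast_cauchy (fun _ => O) s).

Lemma polish_param_continuous : baire_continuous d polish_param.
Proof.
  intros s eps He. destruct (half_pow_small (eps/4) ltac:(lra)) as [n Hn].
  specialize (Hn n (le_n n)).
  destruct (retraction_cont fast_cauchy (fun _ => O) s (S n)) as [N HN].
  exists N; intros t Ht.
  specialize (HN t (agree_sym _ _ _ Ht) n ltac:(lia)). unfold polish_param.
  set (rs := retraction fast_cauchy (fun _ => O) s) in *.
  set (rt := retraction fast_cauchy (fun _ => O) t) in *.
  pose proof (fast_lim_close rs (retraction_in _ _ fast_cauchy_const fast_cauchy_closed s) n) as C1.
  pose proof (fast_lim_close rt (retraction_in _ _ fast_cauchy_const fast_cauchy_closed t) n) as C2.
  rewrite HN, dsym in C1.
  pose proof (dtri (fast_lim rs) (pt (rt n)) (fast_lim rt)). lra.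
Qed.

Lemma polish_param_surj x : exists s, polish_param s = x.
Proof.
  assert (Happrox : forall n, exists k, d x (pt k) < (/2)^(S (S n)))
    by (intros n; apply Hpt, half_pow_pos).
  destruct (choice _ Happrox) as [s Hs].
  assert (Hv : fast_cauchy s).
  { intros n. pose proof (Hs n) as A. pose proof (Hs (S n)) as B. rewrite !half_pow_S in A, B.
    rewrite half_pow_S in B. pose proof (dtri (pt (s n)) x (pt (s (S n)))) as T.
    rewrite (dsym _ x) in T. pose proof (half_pow_pos n). lra. }
  exists s. unfold polish_param. rewrite (retraction_id fast_cauchy _ fast_cauchy_const s Hv).
  symmetry; apply (proj1 (proj2 Hm)). apply Rle_antisym; [|apply (proj1 Hm)].
  apply Rle_of_le_plus_eps; intros eps He.
  destruct (half_pow_small (eps/3) ltac:(lra)) as [n Hn]. specialize (Hn n (le_n n)).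
  pose proof (fast_lim_close s Hv n). pose proof (Hs n) as A. rewrite !half_pow_S in A.
  pose proof (dtri x (pt (s n)) (fast_lim s)). pose proof (half_pow_pos n). lra.
Qed.
End PolishParametrisation.

Lemma polish_analytic {X} (d : X -> X -> R) : polish d -> analytic d (fun _ => True).
Proof.
  intros Hp. destruct (classic (exists x : X, True)) as [[x0 _]|Hn].
  2:{ left; intros x _; apply Hn; eauto. }
  pose proof Hp as [_ [_ [D [[f [Hf1 Hf2]] Hd]]]].
  set (pt := fun n => match f n with Some y => y | None => x0 end).
  assert (Hpt : forall x eps, eps > 0 -> exists n, d x (pt n) < eps).
  { intros x eps He. destruct (Hd x eps He) as [y [Hy Hxy]]. destruct (Hf2 y Hy) as [n Hn].
    exists n; unfold pt; rewrite Hn; auto. }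
  right; exists (polish_param X d x0 pt); split; [apply polish_param_continuous; auto|].
  intros x; split; auto. intros _; eapply polish_param_surj; eauto.
Qed.

Lemma pdist_metric {X} (d : X -> X -> R) : is_metric d -> is_metric (pdist d).
Proof.
  intros [H0 [H1 [H2 H3]]]; unfold pdist; repeat split.
  - intros p q; eapply Rle_trans; [apply (H0 (fst p) (fst q))|apply Rmax_l].
  - intros E. pose proof (Rmax_l (d (fst x) (fst y)) (d (snd x) (snd y))).
    pose proof (Rmax_r (d (fst x) (fst y)) (d (snd x) (snd y))).
    pose proof (H0 (fst x) (fst y)). pose proof (H0 (snd x) (snd y)).
    destruct x as [a b], y as [c e]; simpl in *. f_equal; apply H1; lra.
  - intros E; subst. rewrite (proj2 (H1 _ _) eq_refl), (proj2 (H1 _ _) eq_refl).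
    apply Rmax_left; lra.
  - intros x y; rewrite H2, (H2 (snd x)); auto.
  - intros x y z. apply Rmax_lub.
    + eapply Rle_trans; [apply H3|]. apply Rplus_le_compat; apply Rmax_l.
    + eapply Rle_trans; [apply H3|]. apply Rplus_le_compat; apply Rmax_r.
Qed.

Lemma list_nat_bound (l : list nat) : exists N, forall i, In i l -> (i <= N)%nat.
Proof.
  induction l as [|a l [N HN]]; [exists O; intros i []|].
  exists (Nat.max a N); intros i [E|Hi]; [subst; lia|specialize (HN i Hi); lia].
Qed.

Lemma compact_compl_open {T} (D : T -> T -> R) K :
  is_metric D -> compact_d D K -> open_d D (fun x => ~ K x).
Proof.
  intros Hm HK x Hx. destruct Hm as [H0 [H1 [H2 H3]]].
  destruct (HK nat (fun n y => (/2)^n < D y x)) as [l Hl].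
  - intros n y Hy. exists (D y x - (/2)^n); split; [lra|]. intros z Hz.
    specialize (H3 y z x). lra.
  - intros y Hy. assert (P : 0 < D y x).
    { destruct (H0 y x) as [h|h]; auto. exfalso; symmetry in h; apply H1 in h; subst; auto. }
    destruct (half_pow_small _ P) as [n Hn]. exists n; apply Hn; lia.
  - destruct (list_nat_bound l) as [N HN]. exists ((/2)^N); split; [apply half_pow_pos|].
    intros z Hz Kz. destruct (Hl z Kz) as [i [Hi Hiz]].
    pose proof (half_pow_le i N (HN i Hi)). rewrite H2 in Hiz. lra.
Qed.

Lemma sigma_compact_borel {T} (D : T -> T -> R) S :
  is_metric D -> sigma_compact D S -> borel D S.
Proof.
  intros Hm [K [HK HS]]. eapply sg_ext; [apply (sg_union _ (fun n x => K n x))|].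
  - intros n. eapply sg_ext; [apply sg_compl, sg_base, compact_compl_open; [apply Hm|apply HK]|].
    intros x; split; [apply NNPP|tauto].
  - intros x; rewrite HS; tauto.
Qed.

Lemma metric_cont_fst {X} (d : X -> X -> R) : metric_cont (pdist d) d fst.
Proof.
  intros p eps He; exists eps; split; auto; intros q Hq. pose proof (pdist_fst d p q); lra.
Qed.

Lemma metric_cont_snd {X} (d : X -> X -> R) : metric_cont (pdist d) d snd.
Proof.
  intros p eps He; exists eps; split; auto; intros q Hq. pose proof (pdist_snd d p q); lra.
Qed.

Lemma metric_cont_swap {X} (d : X -> X -> R) :
  metric_cont (pdist d) (pdist d) (fun p => (snd p, fst p)).
Proof.
  intros p eps He; exists eps; split; auto; intros q Hq. unfold pdist in *; simpl.
  rewrite Rmax_comm; auto.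
Qed.

Lemma offdiag_open {X} (d : X -> X -> R) :
  is_metric d -> open_d (pdist d) (fun p => fst p <> snd p).
Proof.
  intros Hm p Hp. pose proof (metric_pos d _ _ Hm Hp) as P.
  exists (d (fst p) (snd p) / 2); split; [lra|].
  intros q Hq E. pose proof (pdist_fst d p q). pose proof (pdist_snd d p q).
  destruct Hm as [_ [_ [H2 H3]]]. specialize (H3 (fst p) (fst q) (snd p)).
  rewrite (H2 (fst q)) in H3. rewrite E in *. lra.
Qed.

Lemma borel_analytic_prod {X} (d : X -> X -> R) S :
  polish d -> borel (pdist d) S -> analytic (pdist d) S.
Proof.
  intros Hp HS.
  assert (HXX : analytic (pdist d) (fun _ => True)).
  { eapply analytic_ext; [apply (analytic_prod d _ _ (polish_analytic d Hp) (polish_analytic d Hp))|].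
    tauto. }
  eapply analytic_ext; [apply (analytic_inter_borel _ _ _ HXX HS)|]. tauto.
Qed.

(** * Measurability of the sets of transport rays *)

Lemma exists_INR_between r : 0 < r -> exists j : nat, r < INR j <= r + 1.
Proof.
  intros Hr. destruct (archimed r) as [H1 H2].
  assert (Hz : (0 < up r)%Z) by (apply lt_IZR; lra).
  exists (Z.to_nat (up r)). rewrite INR_IZR_INZ, Z2Nat.id by lia. lra.
Qed.

Lemma exists_INR_gt r : exists n : nat, r < INR n.
Proof.
  destruct (Rlt_or_le 0 r) as [H|H].
  - destruct (exists_INR_between r H) as [j Hj]; exists j; lra.
  - exists 1%nat; simpl; lra.
Qed.

Definition grid_pt (n j : nat) : R := INR j / INR (S n) - INR n.

Lemma grid_pt_dense a b : a < b -> exists n j, a < grid_pt n j < b.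
Proof.
  intros Hab. destruct (exists_INR_gt (-a)) as [n1 H1].
  destruct (exists_INR_gt (/(b - a))) as [n2 H2].
  set (n := Nat.max n1 n2).
  assert (Hn1 : INR n1 <= INR n) by (apply le_INR; lia).
  assert (Hn2 : INR n2 <= INR n) by (apply le_INR; lia).
  assert (HS : INR (S n) = INR n + 1) by (rewrite S_INR; auto).
  pose proof (pos_INR n) as Hp.
  destruct (exists_INR_between ((a + INR n) * INR (S n))) as [j Hj].
  { apply Rmult_lt_0_compat; lra. }
  exists n, j. unfold grid_pt. rewrite HS in *. split.
  - apply (Rmult_lt_reg_r (INR n + 1)); [lra|]. unfold Rminus. rewrite Rmult_plus_distr_r.
    unfold Rdiv; rewrite Rmult_assoc, Rinv_l by lra. lra.
  - assert (E : INR j / (INR n + 1) <= a + INR n + / (INR n + 1)).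
    { apply (Rmult_le_reg_r (INR n + 1)); [lra|].
      unfold Rdiv; rewrite Rmult_assoc, Rinv_l by lra.
      rewrite !Rmult_plus_distr_r, Rinv_l by lra. lra. }
    assert (F : / (INR n + 1) < b - a).
    { assert (0 < / (b - a)) by (apply Rinv_0_lt_compat; lra).
      rewrite <- (Rinv_inv (b - a)). apply Rinv_lt_contravar; [apply Rmult_lt_0_compat|]; lra. }
    lra.
Qed.

Definition baire_meas (f : baire -> R) : Prop := forall r, baire_bianalytic (fun s => f s <= r).

Lemma baire_meas_lt f r : baire_meas f -> baire_bianalytic (fun s => f s < r).
Proof.
  intros Hf. eapply bianalytic_ext; [apply (bianalytic_union (fun n s => f s <= r - (/2)^n))|].
  - intros n; apply Hf.
  - intros s; split; [intros [n Hn]; pose proof (half_pow_pos n); lra|].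
    intros H. destruct (half_pow_small (r - f s) ltac:(lra)) as [n Hn].
    exists n; specialize (Hn n (le_n n)); lra.
Qed.

Lemma baire_meas_gt f r : baire_meas f -> baire_bianalytic (fun s => f s > r).
Proof. intros Hf. eapply bianalytic_ext; [apply bianalytic_compl, (Hf r)|]. intros s; lra. Qed.

Lemma baire_meas_ge f r : baire_meas f -> baire_bianalytic (fun s => f s >= r).
Proof.
  intros Hf. eapply bianalytic_ext; [apply bianalytic_compl, (baire_meas_lt f r Hf)|].
  intros s; lra.
Qed.

Lemma baire_meas_eq f r : baire_meas f -> baire_bianalytic (fun s => f s = r).
Proof.
  intros Hf. eapply bianalytic_ext; [apply bianalytic_and; [apply (Hf r)|apply (baire_meas_ge f r Hf)]|].
  intros s; lra.
Qed.

Lemma baire_meas_const c : baire_meas (fun _ => c).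
Proof.
  intros r. destruct (Rle_or_lt c r) as [H|H].
  - eapply bianalytic_ext; [apply bianalytic_full|]. intros s; lra.
  - eapply bianalytic_ext; [apply bianalytic_empty|]. intros s; lra.
Qed.

Lemma baire_meas_opp f : baire_meas f -> baire_meas (fun s => - f s).
Proof. intros Hf r. eapply bianalytic_ext; [apply (baire_meas_ge f (-r) Hf)|]. intros s; lra. Qed.

(* [f + g > r] is the union over the countable dense set of grid points [q] of
   [f > q /\ g > r - q]. *)
Lemma baire_meas_plus f g : baire_meas f -> baire_meas g -> baire_meas (fun s => f s + g s).
Proof.
  intros Hf Hg r. eapply bianalytic_ext; [apply bianalytic_compl|].
  - apply (bianalytic_union (fun n s => exists j, f s > grid_pt n j /\ g s > r - grid_pt n j)).
    intros n. apply (bianalytic_union (fun j s => f s > grid_pt n j /\ g s > r - grid_pt n j)).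
    intros j. apply bianalytic_and; apply baire_meas_gt; auto.
  - intros s; split.
    + intros H. apply Rnot_lt_le; intros Hl; apply H.
      destruct (grid_pt_dense (r - g s) (f s) ltac:(lra)) as [n [j Hq]]. exists n, j; lra.
    + intros H [n [j Hq]]. lra.
Qed.

Lemma baire_meas_minus f g : baire_meas f -> baire_meas g -> baire_meas (fun s => f s - g s).
Proof. intros Hf Hg; apply baire_meas_plus; auto; apply baire_meas_opp; auto. Qed.

Lemma baire_meas_rsum (f : nat -> baire -> R) n :
  (forall i, baire_meas (f i)) -> baire_meas (fun s => rsum (fun i => f i s) n).
Proof.
  intros H; induction n as [|n IH]; simpl; [apply baire_meas_const|].
  apply baire_meas_plus; auto.
Qed.

Section DistanceMeasurability.
Context {X : Type} {d : X -> X -> R} {dL : X -> X -> ER} (HdLb : borel_ext_fun d dL).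
Variables u v : baire -> X.
Hypothesis Hu : baire_continuous d u.
Hypothesis Hv : baire_continuous d v.

Let Huv : baire_continuous (pdist d) (fun s => (u s, v s)) := baire_continuous_pair d u v Hu Hv.

Lemma dL_le_bianalytic r : baire_bianalytic (fun s => er_le (dL (u s) (v s)) (Fin r)).
Proof.
  exact (bianalytic_preimage_borel (pdist d) _ (fun p => er_le (dL (fst p) (snd p)) (Fin r))
           Huv (HdLb r)).
Qed.

Lemma dL_finite_bianalytic : baire_bianalytic (fun s => dL (u s) (v s) <> PInf).
Proof.
  eapply bianalytic_ext.
  - apply (bianalytic_union (fun n s => er_le (dL (u s) (v s)) (Fin (INR n)))).
    intros n; apply dL_le_bianalytic.
  - intros s; cbv beta; destruct (dL (u s) (v s)) as [x|]; simpl; split.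
    + intros _; discriminate.
    + intros _. destruct (exists_INR_gt x) as [n Hn]; exists n; simpl; lra.
    + intros [n []].
    + intros H; congruence.
Qed.

Lemma dL_val_meas : baire_meas (fun s => er_val (dL (u s) (v s))).
Proof.
  intros r. eapply bianalytic_ext.
  - apply bianalytic_or; [apply (dL_le_bianalytic r)|].
    apply bianalytic_and; [apply bianalytic_compl, dL_finite_bianalytic|apply (baire_meas_const 0 r)].
  - intros s; cbv beta; destruct (dL (u s) (v s)) as [x|]; simpl; split.
    + intros [H|[H _]]; auto. exfalso; apply H; discriminate.
    + intros H; left; auto.
    + intros [[]|[_ H]]; lra.
    + intros H; right; split; [congruence|lra].
Qed.
End DistanceMeasurability.

Lemma rsum_ext f g n : (forall i, (i < n)%nat -> f i = g i) -> rsum f n = rsum g n.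
Proof.
  induction n as [|n IH]; intros H; simpl; auto. rewrite IH, H; auto; intros; apply H; lia.
Qed.

Lemma fin_er_val a : a <> PInf -> a = Fin (er_val a).
Proof. destruct a; simpl; congruence. Qed.

Lemma er_add3_eq_fin a b c e :
  er_add (er_add a b) c = Fin e <->
  a <> PInf /\ b <> PInf /\ c <> PInf /\ er_val a + er_val b + er_val c - e = 0.
Proof.
  destruct a as [a|], b as [b|], c as [c|]; simpl; split;
    try (intros H; discriminate H); try (intros [? [? [? _]]]; congruence).
  - intros H; inversion H; repeat split; try discriminate; lra.
  - intros [_ [_ [_ H]]]; f_equal; lra.
Qed.

Definition cyc_next (I i : nat) : nat := if Nat.eqb (S i) (S I) then O else S i.

Lemma cyc_next_le I i : (i <= I)%nat -> (cyc_next I i <= I)%nat.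
Proof. intros H; unfold cyc_next. destruct (Nat.eqb_spec (S i) (S I)); lia. Qed.

Lemma cyc_select {A} (w : nat -> A) I i :
  (if Nat.eqb (S i) (S I) then w O else w (S i)) = w (cyc_next I i).
Proof. unfold cyc_next; destruct (Nat.eqb (S i) (S I)); auto. Qed.

(* The zero-sum condition of [Gprime] on the cycle [(w_0, z_0), ..., (w_I, z_I)]. *)
Definition closing_cond {X} (dL : X -> X -> ER) (I : nat) (w z : nat -> X) : Prop :=
  (forall i, (i <= I)%nat -> dL (w (cyc_next I i)) (z i) <> PInf) /\
  rsum (fun i => er_val (dL (w (cyc_next I i)) (z i)) - er_val (dL (w i) (z i))) (S I) = 0.

Lemma closing_cond_ext {X} (dL : X -> X -> ER) I w z w' z' :
  (forall i, (i <= I)%nat -> w i = w' i /\ z i = z' i) ->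
  closing_cond dL I w z -> closing_cond dL I w' z'.
Proof.
  intros E [H1 H2]. split.
  - intros i Hi. rewrite <- (proj1 (E _ (cyc_next_le I i Hi))), <- (proj2 (E i Hi)). auto.
  - rewrite <- H2. apply rsum_ext; intros i Hi.
    rewrite (proj1 (E _ (cyc_next_le I i ltac:(lia)))), !(proj1 (E i ltac:(lia))),
      (proj2 (E i ltac:(lia))). reflexivity.
Qed.

Lemma Gprime_iff {X} (dL : X -> X -> ER) Gam x y :
  Gprime dL Gam x y <->
  exists I w z, (forall i, (i <= I)%nat -> Gam (w i, z i)) /\ w O = x /\ z I = y /\
                closing_cond dL I w z.
Proof.
  unfold Gprime, closing_cond; split.
  - intros [I [w [z [HG [E0 [EI [H1 H2]]]]]]].
    exists I, w, z; repeat split; auto.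
    + intros i Hi; rewrite <- cyc_select; auto.
    + rewrite <- H2; apply rsum_ext; intros i _; rewrite cyc_select; reflexivity.
  - intros [I [w [z [HG [E0 [EI [H1 H2]]]]]]].
    exists I, w, z; repeat split; auto; cbv zeta.
    + intros i Hi; rewrite cyc_select; auto.
    + rewrite <- H2; apply rsum_ext; intros i _; rewrite cyc_select; reflexivity.
Qed.

Lemma Gprime_finite {X} (dL : X -> X -> ER) Gam w z : Gprime dL Gam w z -> dL w z <> PInf.
Proof.
  intros Hw; apply Gprime_iff in Hw as [I [W [Z [_ [<- [<- [H _]]]]]]].
  specialize (H I (le_n I)). unfold cyc_next in H; rewrite Nat.eqb_refl in H. exact H.
Qed.

Lemma baire_continuous_fst_proj {X} (d : X -> X -> R) g i :
  baire_continuous (pdist d) g -> baire_continuous d (fun s => fst (g (baire_proj i s))).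
Proof.
  intros Hg. apply (baire_continuous_metric_comp (pdist d) d (fun s => g (baire_proj i s)) fst).
  - apply baire_continuous_comp; auto; apply baire_cont_proj.
  - apply metric_cont_fst.
Qed.

Lemma baire_continuous_snd_proj {X} (d : X -> X -> R) g i :
  baire_continuous (pdist d) g -> baire_continuous d (fun s => snd (g (baire_proj i s))).
Proof.
  intros Hg. apply (baire_continuous_metric_comp (pdist d) d (fun s => g (baire_proj i s)) snd).
  - apply baire_continuous_comp; auto; apply baire_cont_proj.
  - apply metric_cont_snd.
Qed.

Lemma sigma_analytic_diff {T} (d : T -> T -> R) A C B : analytic d A -> analytic d C ->
  (forall x, B x <-> A x /\ ~ C x) -> sigma_analytic d B.
Proof.
  intros HA HC E.
  eapply sg_ext; [apply sg_compl, (sg_union _ (fun n => match n with O => fun x => ~ A x | _ => C end))|].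
  - intros [|n]; [apply sg_compl, sg_base, HA|apply sg_base, HC].
  - intros x; rewrite E; split.
    + intros H; split; [apply NNPP; intros Hn; apply H; exists O; auto|].
      intros Hc; apply H; exists 1%nat; auto.
    + intros [Ha Hc] [[|n] H]; auto.
Qed.

Lemma all_eq_iff_no_other {X} (P : X -> Prop) (y : X) :
  (forall z, P z -> z = y) <-> ~ exists z, P z /\ z <> y.
Proof.
  split; [intros H [z [H1 H2]]; apply H2, H, H1|].
  intros H z Hz; apply NNPP; intros Hn; apply H; eauto.
Qed.

Section RayMeasurability.
Context {X : Type} {d : X -> X -> R} {dL : X -> X -> ER} {Gam : X * X -> Prop}.
Hypothesis Hpol : polish d.
Hypothesis HdLb : borel_ext_fun d dL.
Hypothesis HGsc : sigma_compact (pdist d) Gam.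

Lemma closing_cond_bianalytic (W Z : baire -> nat -> X) I :
  (forall i, baire_continuous d (fun s => W s i)) ->
  (forall i, baire_continuous d (fun s => Z s i)) ->
  baire_bianalytic (fun s => closing_cond dL I (W s) (Z s)).
Proof.
  intros HW HZ. apply bianalytic_and.
  - apply (bianalytic_inter (fun i s => (i <= I)%nat -> _)). intros i.
    apply bianalytic_impl, (dL_finite_bianalytic HdLb); auto.
  - apply baire_meas_eq.
    apply (baire_meas_rsum (fun i s => er_val (dL (W s (cyc_next I i)) (Z s i))
                                       - er_val (dL (W s i) (Z s i)))).
    intros i. apply baire_meas_minus; apply (dL_val_meas HdLb); auto.
Qed.

(* A pair in [Gprime] is coded by the codes of the points [(w_i, z_i)] of
   [Gam], stacked in one Baire sequence. *)
Lemma Gprime_analytic : analytic (pdist d) (fun p => Gprime dL Gam (fst p) (snd p)).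
Proof.
  assert (HGam : analytic (pdist d) Gam).
  { apply borel_analytic_prod; auto. apply sigma_compact_borel; auto.
    apply pdist_metric, Hpol. }
  destruct HGam as [He|[g [Hg HGam]]].
  { left; intros [x y] Hxy. apply Gprime_iff in Hxy as [I [w [z [HG _]]]].
    apply (He (w O, z O)), HG; lia. }
  set (W := fun s i => fst (g (baire_proj i s))). set (Z := fun s i => snd (g (baire_proj i s))).
  assert (HW : forall i, baire_continuous d (fun s => W s i))
    by (intros i; apply baire_continuous_fst_proj, Hg).
  assert (HZ : forall i, baire_continuous d (fun s => Z s i))
    by (intros i; apply baire_continuous_snd_proj, Hg).
  eapply analytic_ext.
  - apply (analytic_union _ (fun I p => exists s, closing_cond dL I (W s) (Z s) /\ (W s O, Z s I) = p)).
    intros I. apply analytic_of_baire_image;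
      [apply closing_cond_bianalytic; auto|apply baire_continuous_pair; auto].
  - intros [x y]; rewrite Gprime_iff; simpl; split.
    + intros [I [s [Hs E]]]. inversion E; subst x y.
      exists I, (W s), (Z s); split; [|auto].
      intros i _. apply HGam. exists (baire_proj i s). apply surjective_pairing.
    + intros [I [w [z [HG [<- [<- Hc]]]]]].
      assert (Hcode : forall i, exists t, (i <= I)%nat -> g t = (w i, z i)).
      { intros i. destruct (le_lt_dec i I) as [Hi|Hi].
        - destruct (proj1 (HGam (w i, z i)) (HG i Hi)) as [t Ht]; eauto.
        - exists (fun _ => O); lia. }
      destruct (choice _ Hcode) as [t Ht].
      assert (HWZ : forall i, (i <= I)%nat -> W (baire_join t) i = w i /\ Z (baire_join t) i = z i).
      { intros i Hi. unfold W, Z. rewrite baire_proj_join, Ht; auto. }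
      exists I, (baire_join t). split.
      * apply (closing_cond_ext dL I w z); auto. intros i Hi; split; symmetry; apply HWZ; auto.
      * rewrite (proj1 (HWZ O ltac:(lia))), (proj2 (HWZ I (le_n I))). reflexivity.
Qed.

Definition baire_join3 (a b c : baire) : baire :=
  baire_join (fun n => match n with O => a | 1%nat => b | _ => c end).

Lemma Grel_analytic : analytic (pdist d) (fun p => Grel dL Gam (fst p) (snd p)).
Proof.
  destruct (polish_analytic d Hpol) as [HX|[fX [HfX HX]]].
  { left; intros [x y] _; apply (HX x); auto. }
  destruct Gprime_analytic as [He|[g [Hg HG]]].
  { left; intros [x y] [w [z [Hw _]]]; apply (He (w, z)); auto. }
  set (w := fun s => fst (g (baire_proj 0 s))). set (z := fun s => snd (g (baire_proj 0 s))).
  set (x := fun s => fX (baire_proj 1 s)). set (y := fun s => fX (baire_proj 2 s)).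
  assert (Hw : baire_continuous d w) by apply baire_continuous_fst_proj, Hg.
  assert (Hz : baire_continuous d z) by apply baire_continuous_snd_proj, Hg.
  assert (Hx : baire_continuous d x)
    by (apply (baire_continuous_comp d fX (baire_proj 1)); auto; apply baire_cont_proj).
  assert (Hy : baire_continuous d y)
    by (apply (baire_continuous_comp d fX (baire_proj 2)); auto; apply baire_cont_proj).
  set (S' := fun s => dL (w s) (x s) <> PInf /\ dL (x s) (y s) <> PInf /\ dL (y s) (z s) <> PInf /\
     er_val (dL (w s) (x s)) + er_val (dL (x s) (y s)) + er_val (dL (y s) (z s))
     - er_val (dL (w s) (z s)) = 0).
  assert (HS : baire_bianalytic S').
  { repeat apply bianalytic_and; try apply (dL_finite_bianalytic HdLb); auto.
    apply baire_meas_eq. repeat apply baire_meas_minus || apply baire_meas_plus;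
      apply (dL_val_meas HdLb); auto. }
  eapply analytic_ext;
    [apply (analytic_of_baire_image (pdist d) S' (fun s => (x s, y s)) (proj1 HS)
              (baire_continuous_pair d _ _ Hx Hy))|].
  intros [a b]; simpl; split.
  - intros [s [Hs E]]. inversion E; subst a b.
    assert (Gp : Gprime dL Gam (w s) (z s)).
    { apply (HG (w s, z s)). exists (baire_proj 0 s). apply surjective_pairing. }
    exists (w s), (z s). split; auto.
    rewrite (fin_er_val (dL (w s) (z s))) by (apply (Gprime_finite _ _ _ _ Gp)).
    apply er_add3_eq_fin, Hs.
  - intros [w0 [z0 [Gp Eq]]].
    destruct (proj1 (HG (w0, z0)) Gp) as [t0 Ht0].
    destruct (proj1 (HX a) I) as [t1 Ht1]. destruct (proj1 (HX b) I) as [t2 Ht2].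
    exists (baire_join3 t0 t1 t2).
    unfold S', w, x, y, z, baire_join3; rewrite !baire_proj_join, Ht0, Ht1, Ht2; simpl.
    split; [|auto]. apply er_add3_eq_fin.
    rewrite <- fin_er_val by (apply (Gprime_finite _ _ _ _ Gp)); exact Eq.
Qed.

Lemma has_pred_analytic : analytic d (fun y => exists z, Grel dL Gam z y /\ z <> y).
Proof.
  eapply analytic_ext.
  - eapply (analytic_image (pdist d) d _ snd); [|apply metric_cont_snd].
    apply (analytic_inter_borel _ _ (fun p => fst p <> snd p) Grel_analytic).
    apply sg_base, offdiag_open, (proj1 Hpol).
  - intros y; split.
    + intros [[u v] [[H1 H2] E]]; simpl in *; subst; eauto.
    + intros [z [H1 H2]]; exists (z, y); simpl; auto.
Qed.

Lemma has_succ_analytic : analytic d (fun y => exists z, Grel dL Gam y z /\ z <> y).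
Proof.
  eapply analytic_ext.
  - eapply (analytic_image (pdist d) d _ fst); [|apply metric_cont_fst].
    apply (analytic_inter_borel _ _ (fun p => fst p <> snd p) Grel_analytic).
    apply sg_base, offdiag_open, (proj1 Hpol).
  - intros y; split.
    + intros [[u v] [[H1 H2] E]]; simpl in *; subst; eauto.
    + intros [z [H1 H2]]; exists (y, z); simpl; auto.
Qed.

Lemma aset_sigma_analytic :
  sigma_analytic (pdist d) (fun p => aset dL Gam (fst p) (snd p)) /\
  forall A, analytic d A -> sigma_analytic d (rimg (aset dL Gam) A).
Proof.
  pose proof (polish_analytic d Hpol) as HXa. split.
  - apply (sigma_analytic_diff _ (fun p => Grel dL Gam (snd p) (fst p))
             (fun p => True /\ exists z, Grel dL Gam z (snd p) /\ z <> snd p)).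
    + eapply analytic_ext; [apply (analytic_image _ _ _ _ Grel_analytic (metric_cont_swap d))|].
      intros [u v]; split; [intros [[c e] [H E]]; inversion E; subst; auto|].
      intros H; exists (v, u); auto.
    + exact (analytic_prod d _ _ HXa has_pred_analytic).
    + intros [u v]; unfold aset; simpl. rewrite all_eq_iff_no_other; tauto.
  - intros A HA.
    apply (sigma_analytic_diff d (fun y => exists x, A x /\ Grel dL Gam y x)
             (fun y => exists z, Grel dL Gam z y /\ z <> y)).
    + eapply analytic_ext.
      * apply (analytic_image _ _ _ fst
                 (analytic_and _ _ _ (pdist_metric d (proj1 Hpol)) Grel_analytic
                    (analytic_prod d _ _ HXa HA))
                 (metric_cont_fst d)).
      * intros y; split; [intros [[u v] [[H1 [_ H2]] E]]; simpl in *; subst; eauto|].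
        intros [x [H1 H2]]; exists (y, x); simpl; auto.
    + apply has_pred_analytic.
    + intros y; unfold rimg, aset. rewrite <- all_eq_iff_no_other.
      split; [intros [x [H1 [H2 H3]]]; eauto|intros [[x [H1 H2]] H3]; eauto].
Qed.

Lemma bset_sigma_analytic :
  sigma_analytic (pdist d) (fun p => bset dL Gam (fst p) (snd p)) /\
  forall A, analytic d A -> sigma_analytic d (rimg (bset dL Gam) A).
Proof.
  pose proof (polish_analytic d Hpol) as HXa. split.
  - apply (sigma_analytic_diff _ (fun p => Grel dL Gam (fst p) (snd p))
             (fun p => True /\ exists z, Grel dL Gam (snd p) z /\ z <> snd p)).
    + apply Grel_analytic.
    + exact (analytic_prod d _ _ HXa has_succ_analytic).
    + intros [u v]; unfold bset; simpl. rewrite (all_eq_iff_no_other (Grel dL Gam v)); tauto.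
  - intros A HA.
    apply (sigma_analytic_diff d (fun y => exists x, A x /\ Grel dL Gam x y)
             (fun y => exists z, Grel dL Gam y z /\ z <> y)).
    + eapply analytic_ext.
      * apply (analytic_image _ _ _ snd
                 (analytic_and _ _ _ (pdist_metric d (proj1 Hpol)) Grel_analytic
                    (analytic_prod d _ _ HA HXa))
                 (metric_cont_snd d)).
      * intros y; split; [intros [[u v] [[H1 [H2 _]] E]]; simpl in *; subst; eauto|].
        intros [x [H1 H2]]; exists (x, y); simpl; auto.
    + apply has_succ_analytic.
    + intros y; unfold rimg, bset. rewrite <- (all_eq_iff_no_other (Grel dL Gam y)).
      split; [intros [x [H1 [H2 H3]]]; eauto|intros [[x [H1 H2]] H3]; eauto].
Qed.
End RayMeasurability.

(** * Geometry of transport rays *)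

Lemma Fin_inj a b : Fin a = Fin b -> a = b.
Proof. intros H; inversion H; auto. Qed.

Section ExtDistance.
Context {X : Type} {dL : X -> X -> ER} (HdL : is_ext_distance dL).

Lemma dL_nonneg x y a : dL x y = Fin a -> 0 <= a.
Proof. apply (proj1 HdL). Qed.

Lemma dL_refl x : dL x x = Fin 0.
Proof. apply (proj1 (proj2 HdL)); auto. Qed.

Lemma dL_eq0 x y : dL x y = Fin 0 -> x = y.
Proof. apply (proj1 (proj2 HdL)). Qed.

Lemma dL_sym x y : dL x y = dL y x.
Proof. apply (proj1 (proj2 (proj2 HdL))). Qed.

Lemma dL_tri x y z a b : dL x y = Fin a -> dL y z = Fin b ->
  exists c, dL x z = Fin c /\ c <= a + b.
Proof.
  intros H1 H2. pose proof (proj2 (proj2 (proj2 HdL)) x y z) as T.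
  rewrite H1, H2 in T; simpl in T.
  destruct (dL x z) as [c|]; [exists c; auto|contradiction].
Qed.

Lemma dL_tri_le x y z a b c : dL x y = Fin a -> dL y z = Fin b -> dL x z = Fin c -> c <= a + b.
Proof.
  intros H1 H2 H3. destruct (dL_tri x y z a b H1 H2) as [c' [E L]].
  rewrite H3 in E; apply Fin_inj in E; lra.
Qed.

Lemma dL_pos x y p : x <> y -> dL x y = Fin p -> 0 < p.
Proof.
  intros Hxy Hp. destruct (dL_nonneg _ _ _ Hp) as [H|<-]; auto.
  exfalso; apply Hxy, dL_eq0, Hp.
Qed.

Lemma dL_tri4_le z u m y A B C E : dL z u = Fin A -> dL u m = Fin B -> dL m y = Fin C ->
  dL z y = Fin E -> E <= A + B + C.
Proof.
  intros H1 H2 H3 H4. destruct (dL_tri u m y B C H2 H3) as [t [Et Lt]].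
  pose proof (dL_tri_le z u y A t E H1 Et H4). lra.
Qed.

Lemma dL_tight_middle z u x v y a b c r e :
  dL z u = Fin a -> dL u x = Fin b -> dL x v = Fin c -> dL v y = Fin r -> dL z y = Fin e ->
  a + b + c + r <= e -> dL u v = Fin (b + c).
Proof.
  intros Hzu Hux Hxv Hvy Hzy He. destruct (dL_tri u x v b c Hux Hxv) as [t [Ht Lt]].
  pose proof (dL_tri4_le z u v y a t r e Hzu Ht Hvy Hzy). rewrite Ht; f_equal; lra.
Qed.

Variable Gam : X * X -> Prop.

Lemma Grel_dist u v : Grel dL Gam u v -> exists w z a b c, Gprime dL Gam w z /\
  dL w u = Fin a /\ dL u v = Fin b /\ dL v z = Fin c /\ dL w z = Fin (a + b + c).
Proof.
  intros [w [z [Gp E]]]. exists w, z. pose proof (Gprime_finite dL Gam w z Gp) as Hf.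
  destruct (dL w u) as [a|], (dL u v) as [b|], (dL v z) as [c|]; simpl in E;
    try (exfalso; apply Hf; symmetry; exact E).
  exists a, b, c. repeat split; auto.
Qed.

Lemma Grel_intro w z u v a b c : Gprime dL Gam w z -> dL w u = Fin a ->
  dL u v = Fin b -> dL v z = Fin c -> dL w z = Fin (a + b + c) -> Grel dL Gam u v.
Proof. intros Gp H1 H2 H3 H4. exists w, z; split; auto. rewrite H1, H2, H3, H4; reflexivity. Qed.

Lemma Grel_split u v m p q : Grel dL Gam u v -> dL u m = Fin p -> dL m v = Fin q ->
  dL u v = Fin (p + q) -> Grel dL Gam u m /\ Grel dL Gam m v.
Proof.
  intros G H1 H2 H3. destruct (Grel_dist u v G) as [w [z [a [b [c [Gp [E1 [E2 [E3 E4]]]]]]]]].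
  rewrite H3 in E2; apply Fin_inj in E2; subst b.
  destruct (dL_tri m v z q c H2 E3) as [t [Et Lt]].
  destruct (dL_tri w u m a p E1 H1) as [t' [Et' Lt']].
  pose proof (dL_tri_le w m z t' t _ Et' Et E4).
  split.
  - apply (Grel_intro w z u m a p t); auto. rewrite E4; f_equal; lra.
  - apply (Grel_intro w z m v t' q c); auto. rewrite E4; f_equal; lra.
Qed.

Lemma Grel_initial x y : Grel dL Gam x y -> (forall z, Grel dL Gam z y -> z = y) -> x = y.
Proof.
  intros G Hi. destruct (Grel_dist x y G) as [w [z [a [b [c [Gp [E1 [E2 [E3 E4]]]]]]]]].
  destruct (dL_tri w x y a b E1 E2) as [t [Et Lt]].
  pose proof (dL_tri_le w y z t c _ Et E3 E4).
  assert (Gw : Grel dL Gam w y).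
  { apply (Grel_intro w z w y 0 t c); auto; [apply dL_refl|rewrite E4; f_equal; lra]. }
  apply Hi in Gw; subst w. rewrite dL_refl in Et; apply Fin_inj in Et.
  pose proof (dL_nonneg _ _ _ E1); pose proof (dL_nonneg _ _ _ E2).
  apply dL_eq0. rewrite E2; f_equal; lra.
Qed.

Hypothesis Hgeod : geodesic_space dL.

Lemma Grel_midpoint u v : Grel dL Gam u v -> u <> v ->
  exists m, Grel dL Gam u m /\ Grel dL Gam m v /\ m <> u /\ m <> v.
Proof.
  intros G Hn. destruct (Grel_dist u v G) as [w [z [a [b [c [Gp [E1 [E2 [E3 E4]]]]]]]]].
  destruct (Hgeod u v b E2) as [g [[D [HD Hg]] [G0 G1]]].
  rewrite G0, G1, E2 in HD; apply Fin_inj in HD; subst D.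
  assert (Hm1 := Hg 0 (1/2) ltac:(lra) ltac:(lra)). assert (Hm2 := Hg (1/2) 1 ltac:(lra) ltac:(lra)).
  rewrite G0 in Hm1; rewrite G1 in Hm2.
  replace (Rabs (1/2 - 0) * b) with (b/2) in Hm1 by (rewrite Rabs_right; lra).
  replace (Rabs (1 - 1/2) * b) with (b/2) in Hm2 by (rewrite Rabs_right; lra).
  assert (Hb : b <> 0) by (intros ->; apply Hn, dL_eq0, E2).
  destruct (Grel_split u v (g (1/2)) (b/2) (b/2) G Hm1 Hm2 ltac:(rewrite E2; f_equal; lra))
    as [A1 A2].
  exists (g (1/2)); repeat split; auto.
  - intros E; rewrite E, dL_refl in Hm1; apply Fin_inj in Hm1; lra.
  - intros E; rewrite E, dL_refl in Hm2; apply Fin_inj in Hm2; lra.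
Qed.

Lemma Grel_midpoint_T u v : Grel dL Gam u v -> u <> v ->
  exists m, Tset dL Gam m /\ Grel dL Gam u m /\ Grel dL Gam m v.
Proof.
  intros G Hn. destruct (Grel_midpoint u v G Hn) as [m [Hum [Hmv [Nu Nv]]]].
  exists m; repeat split; auto; [exists u|exists v]; auto.
Qed.

Let a := aset dL Gam.
Let b := bset dL Gam.
Let T := Tset dL Gam.
Let Te := Teset dL Gam.

Lemma aset_bset_disjoint_Te x y : a x y -> b x y -> Te x -> False.
Proof.
  intros [Ha1 Ha2] [Hb1 Hb2] HT. pose proof (Grel_initial x y Hb1 Ha2); subst y.
  destruct HT as [[y0 [H1 H2]]|[y0 [H1 H2]]].
  - apply H2; symmetry; apply Ha2, H1.
  - apply H2; symmetry; apply Hb2, H1.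
Qed.

Lemma aset_image_T_Te y : rimg a T y <-> rimg a Te y.
Proof.
  split; [intros [x [[H1 H2] H3]]; exists x; split; [right|]; auto|].
  intros [x [HT [Ha1 Ha2]]]. destruct (classic (y = x)) as [<-|E].
  - destruct HT as [[y0 [H1 H2]]|[y0 [H1 H2]]].
    + exfalso; apply H2; symmetry; apply Ha2, H1.
    + destruct (Grel_midpoint_T y y0 H1 H2) as [m [Tm [Hym _]]].
      exists m; split; [|split]; auto.
  - destruct (Grel_midpoint_T y x Ha1 E) as [m [Tm [Hym _]]].
    exists m; split; [|split]; auto.
Qed.

Lemma bset_image_T_Te y : rimg b T y <-> rimg b Te y.
Proof.
  split; [intros [x [[H1 H2] H3]]; exists x; split; [right|]; auto|].
  intros [x [HT [Hb1 Hb2]]]. destruct (classic (x = y)) as [->|E].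
  - destruct HT as [[y0 [H1 H2]]|[y0 [H1 H2]]].
    + destruct (Grel_midpoint_T y0 y H1 (not_eq_sym H2)) as [m [Tm [_ Hmy]]].
      exists m; split; [|split]; auto.
    + exfalso; apply H2; symmetry; apply Hb2, H1.
  - destruct (Grel_midpoint_T x y Hb1 E) as [m [Tm [_ Hmy]]].
    exists m; split; [|split]; auto.
Qed.

Lemma Te_decomposition x : Te x <-> T x \/ rimg a T x \/ rimg b T x.
Proof.
  split.
  - intros HT. destruct (classic (T x)) as [H|H]; [left; auto|right].
    destruct HT as [[y0 [H1 H2]]|[y0 [H1 H2]]].
    + right. destruct (Grel_midpoint_T y0 x H1 (not_eq_sym H2)) as [m [Tm [_ Hmx]]].
      exists m; split; [|split]; auto.
      intros z Hz; apply NNPP; intros Hne; apply H; split; [exists y0; auto|exists z; auto].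
    + left. destruct (Grel_midpoint_T x y0 H1 H2) as [m [Tm [Hxm _]]].
      exists m; split; [|split]; auto.
      intros z Hz; apply NNPP; intros Hne; apply H; split; [exists z; auto|exists y0; auto].
  - intros [H|[[m [[H1 H2] [Ha1 Ha2]]]|[m [[H1 H2] [Hb1 Hb2]]]]]; [left; apply H| |].
    + destruct (classic (x = m)) as [<-|E].
      * destruct H1 as [y0 [Y1 Y2]]. exfalso; apply Y2; symmetry; apply Ha2, Y1.
      * right; exists m; split; auto.
    + destruct (classic (x = m)) as [<-|E].
      * destruct H2 as [y0 [Y1 Y2]]. exfalso; apply Y2; symmetry; apply Hb2, Y1.
      * left; exists m; split; auto.
Qed.

Lemma T_disjoint_endpoints x : T x -> ~ (rimg a T x \/ rimg b T x).
Proof.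
  intros [[y1 [A1 A2]] [y2 [B1 B2]]] [[m [_ [_ H]]]|[m [_ [_ H]]]].
  - apply A2; symmetry; apply H, A1.
  - apply B2; symmetry; apply H, B1.
Qed.
End ExtDistance.

Lemma cyc_next_lt I i : (i < I)%nat -> cyc_next I i = S i.
Proof. intros H; unfold cyc_next. destruct (Nat.eqb_spec (S i) (S I)); [lia|auto]. Qed.

Lemma cyc_next_last I : cyc_next I I = O.
Proof. unfold cyc_next; rewrite Nat.eqb_refl; reflexivity. Qed.

Lemma rsum_minus f g n : rsum (fun i => f i - g i) n = rsum f n - rsum g n.
Proof. induction n; simpl; lra. Qed.

Lemma rsum_add f m k : rsum f (m + k) = rsum f m + rsum (fun j => f (m + j)%nat) k.
Proof.
  induction k as [|k IH]; simpl; [rewrite Nat.add_0_r; lra|].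
  rewrite Nat.add_succ_r; simpl; lra.
Qed.

Lemma rsum_split_around f I J :
  rsum f (S (S I + J)) = rsum f I + f I + (rsum (fun j => f (S I + j)%nat) J + f (S I + J)%nat).
Proof. replace (S (S I + J)) with (S I + S J)%nat by lia. rewrite rsum_add. reflexivity. Qed.

Lemma ersum_fin f m : (forall k, (k < m)%nat -> f k <> PInf) ->
  ersum f m = Fin (rsum (fun k => er_val (f k)) m).
Proof.
  induction m as [|m IH]; intros H; simpl; auto. rewrite IH by (intros; apply H; lia).
  rewrite (fin_er_val (f m)) by (apply H; lia). reflexivity.
Qed.

Lemma closing_cond_sum {X} (dL : X -> X -> ER) I W Z : closing_cond dL I W Z ->
  rsum (fun i => er_val (dL (W i) (Z i))) (S I) =
  rsum (fun i => er_val (dL (W (S i)) (Z i))) I + er_val (dL (W O) (Z I)).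
Proof.
  intros [_ H]. rewrite rsum_minus in H. simpl in H. rewrite cyc_next_last in H.
  rewrite (rsum_ext _ (fun i => er_val (dL (W (S i)) (Z i)))) in H;
    [|intros i Hi; rewrite cyc_next_lt; auto].
  simpl; lra.
Qed.

Definition seq_cat {A} (I : nat) (f g : nat -> A) (k : nat) : A :=
  if Nat.leb k I then f k else g (k - S I)%nat.

Lemma seq_cat_l {A} I (f g : nat -> A) k : (k <= I)%nat -> seq_cat I f g k = f k.
Proof. intros H; unfold seq_cat. destruct (Nat.leb_spec k I); [auto|lia]. Qed.

Lemma seq_cat_r {A} I (f g : nat -> A) j : seq_cat I f g (S I + j) = g j.
Proof.
  unfold seq_cat. destruct (Nat.leb_spec (S I + j) I); [lia|]. f_equal; lia.
Qed.

Lemma seq_cat_next_l {A} I J (f g : nat -> A) k : (k < I)%nat ->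
  seq_cat I f g (cyc_next (S I + J) k) = f (S k).
Proof. intros H. rewrite cyc_next_lt by lia. apply seq_cat_l; lia. Qed.

Lemma seq_cat_next_junction {A} I J (f g : nat -> A) :
  seq_cat I f g (cyc_next (S I + J) I) = g O.
Proof. rewrite cyc_next_lt by lia. rewrite <- (Nat.add_0_r (S I)). apply seq_cat_r. Qed.

Lemma seq_cat_next_r {A} I J (f g : nat -> A) j : (j < J)%nat ->
  seq_cat I f g (cyc_next (S I + J) (S I + j)) = g (S j).
Proof.
  intros H. rewrite cyc_next_lt by lia. rewrite <- Nat.add_succ_r. apply seq_cat_r.
Qed.

Lemma seq_cat_next_last {A} I J (f g : nat -> A) :
  seq_cat I f g (cyc_next (S I + J) (S I + J)) = f O.
Proof. rewrite cyc_next_last. apply seq_cat_l; lia. Qed.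

Lemma seq_cat_all {A B} (P : A -> B -> Prop) I J f g f' g' :
  (forall k, (k <= I)%nat -> P (f k) (g k)) -> (forall j, (j <= J)%nat -> P (f' j) (g' j)) ->
  forall k, (k <= S I + J)%nat -> P (seq_cat I f f' k) (seq_cat I g g' k).
Proof.
  intros H1 H2 k Hk. destruct (le_lt_dec k I) as [H|H].
  - rewrite !seq_cat_l; auto.
  - replace k with (S I + (k - S I))%nat by lia. rewrite !seq_cat_r. apply H2; lia.
Qed.

Lemma seq_cat_closing_finite {X} (dL : X -> X -> ER) I J W Z W2 Z2 :
  closing_cond dL I W Z -> closing_cond dL J W2 Z2 ->
  dL (W2 O) (Z I) <> PInf -> dL (W O) (Z2 J) <> PInf ->
  forall k, (k <= S I + J)%nat ->
    dL (seq_cat I W W2 (cyc_next (S I + J) k)) (seq_cat I Z Z2 k) <> PInf.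
Proof.
  intros [F1 _] [F2 _] Ha Hb k Hk. destruct (lt_eq_lt_dec k I) as [[H|E]|H].
  - rewrite seq_cat_next_l, seq_cat_l, <- (cyc_next_lt I k) by lia. apply F1; lia.
  - subst k. rewrite seq_cat_next_junction, seq_cat_l by lia. exact Ha.
  - replace k with (S I + (k - S I))%nat by lia. rewrite seq_cat_r.
    destruct (Nat.eq_dec (k - S I) J) as [E|Hj].
    + rewrite E, seq_cat_next_last. exact Hb.
    + rewrite seq_cat_next_r, <- (cyc_next_lt J (k - S I)) by lia. apply F2; lia.
Qed.

Section CyclicalMonotonicity.
Context {X : Type} {dL : X -> X -> ER} {Gam : X * X -> Prop}.
Hypothesis HGcm : cyclically_monotone dL Gam.
Hypothesis HGfin : forall p, Gam p -> dL (fst p) (snd p) <> PInf.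

Lemma cyclically_monotone_rsum n (x y : nat -> X) :
  (forall k, (k <= n)%nat -> Gam (x k, y k)) ->
  (forall k, (k <= n)%nat -> dL (x (cyc_next n k)) (y k) <> PInf) ->
  rsum (fun k => er_val (dL (x k) (y k))) (S n) <=
  rsum (fun k => er_val (dL (x (cyc_next n k)) (y k))) (S n).
Proof.
  intros HG Hfin. pose proof (HGcm n x y HG) as CM; cbv beta zeta in CM.
  rewrite (ersum_fin (fun i => dL (x i) (y i))) in CM
    by (intros k Hk; apply (HGfin (x k, y k)), HG; lia).
  rewrite ersum_fin in CM by (intros k Hk; rewrite cyc_select; apply Hfin; lia).
  rewrite (rsum_ext (fun k => er_val (dL (if Nat.eqb (S k) (S n) then x O else x (S k)) (y k)))
             (fun k => er_val (dL (x (cyc_next n k)) (y k)))) in CM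
    by (intros k _; rewrite cyc_select; reflexivity).
  exact CM.
Qed.

(* Concatenating the two cycles witnessing [Gprime w1 z1] and [Gprime w2 z2]
   into a single cycle and applying cyclical monotonicity. *)
Lemma Gprime_cross_le w1 z1 w2 z2 e1 e2 a b :
  Gprime dL Gam w1 z1 -> Gprime dL Gam w2 z2 -> dL w1 z1 = Fin e1 -> dL w2 z2 = Fin e2 ->
  dL w2 z1 = Fin a -> dL w1 z2 = Fin b -> e1 + e2 <= a + b.
Proof.
  intros Gp1 Gp2 He1 He2 Ha Hb.
  apply Gprime_iff in Gp1 as [I [W [Z [HG1 [<- [<- C1]]]]]].
  apply Gprime_iff in Gp2 as [J [W2 [Z2 [HG2 [<- [<- C2]]]]]].
  pose proof (closing_cond_sum dL I W Z C1) as S1.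
  pose proof (closing_cond_sum dL J W2 Z2 C2) as S2.
  rewrite He1 in S1; rewrite He2 in S2; simpl in S1, S2.
  set (x := seq_cat I W W2). set (y := seq_cat I Z Z2).
  pose proof (cyclically_monotone_rsum (S I + J) x y
    (seq_cat_all (fun u v => Gam (u, v)) I J W Z W2 Z2 HG1 HG2)
    (seq_cat_closing_finite dL I J W Z W2 Z2 C1 C2
       ltac:(rewrite Ha; discriminate) ltac:(rewrite Hb; discriminate))) as CM.
  rewrite !rsum_split_around in CM.
  rewrite (rsum_ext (fun k => er_val (dL (x k) (y k))) (fun i => er_val (dL (W i) (Z i))) I) in CM
    by (intros k Hk; unfold x, y; rewrite !seq_cat_l by lia; auto).
  rewrite (rsum_ext (fun j => er_val (dL (x (S I + j)%nat) (y (S I + j)%nat)))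
             (fun j => er_val (dL (W2 j) (Z2 j))) J) in CM
    by (intros j _; unfold x, y; rewrite !seq_cat_r; auto).
  rewrite (rsum_ext (fun k => er_val (dL (x (cyc_next (S I + J) k)) (y k)))
             (fun i => er_val (dL (W (S i)) (Z i))) I) in CM
    by (intros k Hk; unfold x, y; rewrite seq_cat_next_l, seq_cat_l by lia; auto).
  rewrite (rsum_ext (fun j => er_val (dL (x (cyc_next (S I + J) (S I + j))) (y (S I + j)%nat)))
             (fun j => er_val (dL (W2 (S j)) (Z2 j))) J) in CM
    by (intros j Hj; unfold x, y; rewrite seq_cat_next_r, seq_cat_r by lia; auto).
  unfold x, y in CM.
  rewrite seq_cat_next_junction, seq_cat_next_last, !seq_cat_l, !seq_cat_r, Ha, Hb in CM by lia.
  simpl in S1, S2, CM. lra.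
Qed.
End CyclicalMonotonicity.

Section NonBranching.
Context {X : Type} {dL : X -> X -> ER} (HdL : is_ext_distance dL).
Hypothesis Hgeod : geodesic_space dL.
Hypothesis Hnb : non_branching dL.

Lemma geodesic_grid x y p h n : dL x y = Fin p -> 0 < p -> 0 < h -> INR n * h <= p ->
  exists P : nat -> X, P O = x /\
    (forall j k, (j <= k <= n)%nat -> dL (P j) (P k) = Fin ((INR k - INR j) * h)) /\
    dL (P n) y = Fin (p - INR n * h).
Proof.
  intros Hxy Hp Hh Hnh. destruct (Hgeod x y p Hxy) as [g [[D [HD Hg]] [G0 G1]]].
  rewrite G0, G1, Hxy in HD. apply Fin_inj in HD; subst D.
  assert (Hk : forall k, (k <= n)%nat -> 0 <= INR k * h / p <= 1).
  { intros k Hk. pose proof (le_INR _ _ Hk). pose proof (pos_INR k).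
    assert (INR k * h <= INR n * h) by (apply Rmult_le_compat_r; lra).
    split; [apply Rmult_le_pos; [apply Rmult_le_pos; lra|left; apply Rinv_0_lt_compat; lra]|].
    apply (Rmult_le_reg_r p); [lra|]. unfold Rdiv; rewrite Rmult_assoc, Rinv_l by lra. lra. }
  exists (fun k => g (INR k * h / p)). split; [|split].
  - rewrite <- G0; f_equal; simpl; field; lra.
  - intros j k [Hjk Hkn]. rewrite Hg by (apply Hk; lia).
    pose proof (le_INR _ _ Hjk). rewrite Rabs_right.
    + f_equal; field; lra.
    + apply Rle_ge. unfold Rdiv. rewrite <- Rmult_minus_distr_r, <- Rmult_minus_distr_r.
      apply Rmult_le_pos; [apply Rmult_le_pos; lra|left; apply Rinv_0_lt_compat; lra].
  - rewrite <- G1, Hg by (first [apply Hk; lia|lra]). rewrite Rabs_right.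
    + f_equal; field; lra.
    + pose proof (Hk n (le_n n)). lra.
Qed.

(* Each new grid point is pinned down by non-branching from the previous two. *)
Lemma grids_coincide u x h n (P Q : nat -> X) : 0 < h -> dL u x = Fin h ->
  P O = x -> Q O = x ->
  (forall j k, (j <= k <= n)%nat -> dL (P j) (P k) = Fin ((INR k - INR j) * h)) ->
  (forall j k, (j <= k <= n)%nat -> dL (Q j) (Q k) = Fin ((INR k - INR j) * h)) ->
  (forall k, (k <= n)%nat -> dL u (P k) = Fin (h + INR k * h)) ->
  (forall k, (k <= n)%nat -> dL u (Q k) = Fin (h + INR k * h)) ->
  P n = Q n.
Proof.
  intros Hh Hux P0 Q0 PP QQ uP uQ.
  assert (Ind : forall k, (S k <= n)%nat -> P k = Q k /\ P (S k) = Q (S k)).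
  { induction k as [|k IH]; intros Hk.
    - split; [congruence|]. apply (Hnb u x (2 * h) ltac:(lra)).
      + rewrite Hux; f_equal; field.
      + rewrite uP by lia; simpl; f_equal; lra.
      + rewrite <- P0, PP by lia; simpl; f_equal; field.
      + rewrite uQ by lia; simpl; f_equal; lra.
      + rewrite <- Q0, QQ by lia; simpl; f_equal; field.
    - destruct (IH ltac:(lia)) as [E1 E2]. split; auto.
      apply (Hnb (P k) (P (S k)) (2 * h) ltac:(lra)).
      + rewrite PP by lia; f_equal; rewrite S_INR; field.
      + rewrite PP by lia; f_equal; rewrite !S_INR; field.
      + rewrite PP by lia; f_equal; rewrite !S_INR; field.
      + rewrite E1, QQ by lia; f_equal; rewrite !S_INR; field.
      + rewrite E2, QQ by lia; f_equal; rewrite !S_INR; field. }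
  destruct n as [|m]; [congruence|]. apply (Ind m (le_n _)).
Qed.

(* [y] lies on a geodesic from [x] to [y']: discretise both segments with a
   step smaller than [dL z x] and propagate non-branching along the grids. *)
Lemma ray_nonbranching z x y y' L p p' : dL z x = Fin L -> 0 < L ->
  dL x y = Fin p -> dL x y' = Fin p' -> 0 < p -> p <= p' ->
  dL z y = Fin (L + p) -> dL z y' = Fin (L + p') -> dL y' y = Fin (p' - p).
Proof.
  intros Hzx HL Hxy Hxy' Hp Hpp Hzy Hzy'.
  destruct (exists_INR_gt (p / L)) as [n Hn].
  assert (Hn0 : 0 < INR n) by (assert (0 < p / L) by (apply Rdiv_lt_0_compat; lra); lra).
  set (h := p / INR n).
  assert (Hh : 0 < h) by (apply Rdiv_lt_0_compat; lra).
  assert (Hnh : INR n * h = p) by (unfold h; field; lra).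
  assert (HhL : h < L).
  { apply (Rmult_lt_reg_r (INR n)); [lra|]. rewrite Rmult_comm, Hnh.
    apply (Rmult_lt_reg_r (/ L)); [apply Rinv_0_lt_compat; lra|].
    replace (L * INR n * / L) with (INR n) by (field; lra). exact Hn. }
  destruct (geodesic_grid x z L h 1 ltac:(rewrite (dL_sym HdL); auto) HL Hh ltac:(simpl; lra))
    as [U [U0 [UU U1]]].
  assert (Hux : dL (U 1%nat) x = Fin h).
  { rewrite <- U0, (dL_sym HdL), UU by lia; f_equal; simpl; lra. }
  assert (Hzu : dL z (U 1%nat) = Fin (L - h)) by (rewrite (dL_sym HdL), U1; f_equal; simpl; lra).
  destruct (geodesic_grid x y p h n Hxy Hp Hh ltac:(lra)) as [P [P0 [PP Pn]]].
  destruct (geodesic_grid x y' p' h n Hxy' ltac:(lra) Hh ltac:(lra)) as [Q [Q0 [QQ Qn]]].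
  assert (Pn' : P n = y) by (apply (dL_eq0 HdL); rewrite Pn; f_equal; lra).
  assert (EPQ : P n = Q n).
  { apply (grids_coincide (U 1%nat) x h n P Q); auto; intros k Hk.
    - pose proof (PP k n ltac:(lia)) as Hkn. rewrite Pn' in Hkn.
      apply ((dL_tight_middle HdL) z _ x _ y (L - h) h (INR k * h) ((INR n - INR k) * h) (L + p));
        auto; [rewrite <- P0, PP by lia; f_equal; simpl; lra|].
      rewrite Rmult_minus_distr_r; lra.
    - pose proof (QQ k n ltac:(lia)) as Hkn.
      destruct (dL_tri HdL (Q k) (Q n) y' _ _ Hkn Qn) as [r [Hr Lr]].
      apply ((dL_tight_middle HdL) z _ x _ y' (L - h) h (INR k * h) r (L + p'));
        auto; [rewrite <- Q0, QQ by lia; f_equal; simpl; lra|].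
      rewrite Rmult_minus_distr_r in Lr; lra. }
  rewrite <- Pn', EPQ, (dL_sym HdL), Qn. f_equal; lra.
Qed.
End NonBranching.

Section EndpointUniqueness.
Context {X : Type} {dL : X -> X -> ER} (HdL : is_ext_distance dL).
Hypothesis Hgeod : geodesic_space dL.
Hypothesis Hnb : non_branching dL.
Variable Gam : X * X -> Prop.
Hypothesis HGcm : cyclically_monotone dL Gam.
Hypothesis HGfin : forall p, Gam p -> dL (fst p) (snd p) <> PInf.

(* Cyclical monotonicity makes consecutive ray pieces [G u x] and [G x v]
   concatenate geodesically. *)
Lemma Grel_aligned u x v : Grel dL Gam u x -> Grel dL Gam x v ->
  exists b1 b2, dL u x = Fin b1 /\ dL x v = Fin b2 /\ dL u v = Fin (b1 + b2).
Proof.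
  intros G1 G2.
  destruct (Grel_dist Gam u x G1) as [w1 [z1 [a1 [b1 [c1 [Gp1 [E1 [E2 [E3 E4]]]]]]]]].
  destruct (Grel_dist Gam x v G2) as [w2 [z2 [a2 [b2 [c2 [Gp2 [F1 [F2 [F3 F4]]]]]]]]].
  destruct (dL_tri HdL w2 x z1 a2 c1 F1 E3) as [A [HA LA]].
  destruct (dL_tri HdL u x v b1 b2 E2 F2) as [t [Ht Lt]].
  destruct (dL_tri HdL u v z2 t c2 Ht F3) as [t' [Ht' Lt']].
  destruct (dL_tri HdL w1 u z2 a1 t' E1 Ht') as [B [HB LB]].
  pose proof (Gprime_cross_le HGcm HGfin w1 z1 w2 z2 _ _ A B Gp1 Gp2 E4 F4 HA HB).
  exists b1, b2; repeat split; auto. rewrite Ht; f_equal; lra.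
Qed.

Lemma aset_unique_le x y y' p p' : Tset dL Gam x -> aset dL Gam x y -> aset dL Gam x y' ->
  dL x y = Fin p -> dL x y' = Fin p' -> p <= p' -> y = y'.
Proof.
  intros [[y0 [G0 N0]] [z0 [Gz Nz]]] [Ga Ia] [Ga' Ia'] Hp Hp' Hle.
  destruct (Grel_aligned y x z0 Ga Gz) as [b1 [L [B1 [BL BZ]]]].
  destruct (Grel_aligned y' x z0 Ga' Gz) as [b1' [L' [B1' [BL' BZ']]]].
  rewrite BL in BL'; apply Fin_inj in BL'; subst L'.
  rewrite (dL_sym HdL), Hp in B1; apply Fin_inj in B1; subst b1.
  rewrite (dL_sym HdL), Hp' in B1'; apply Fin_inj in B1'; subst b1'.
  assert (HL : 0 < L) by (apply (dL_pos HdL x z0); auto).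
  assert (Hpp : 0 < p).
  { apply (dL_pos HdL x y); auto. intros <-. apply N0; symmetry; apply Ia, G0. }
  assert (C := ray_nonbranching HdL Hgeod Hnb z0 x y y' L p p'
    ltac:(rewrite (dL_sym HdL); auto) HL Hp Hp' Hpp Hle
    ltac:(rewrite (dL_sym HdL), BZ; f_equal; lra) ltac:(rewrite (dL_sym HdL), BZ'; f_equal; lra)).
  destruct (Grel_split HdL Gam y' x y (p' - p) p Ga' C ltac:(rewrite (dL_sym HdL); auto)
    ltac:(rewrite (dL_sym HdL), Hp'; f_equal; lra)) as [G _].
  symmetry; apply Ia, G.
Qed.

Lemma bset_unique_le x y y' p p' : Tset dL Gam x -> bset dL Gam x y -> bset dL Gam x y' ->
  dL x y = Fin p -> dL x y' = Fin p' -> p <= p' -> y = y'.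
Proof.
  intros [[y0 [G0 N0]] [z0 [Gz Nz]]] [Gb Ib] [Gb' Ib'] Hp Hp' Hle.
  destruct (Grel_aligned y0 x y G0 Gb) as [L [b2 [BL [B2 BZ]]]].
  destruct (Grel_aligned y0 x y' G0 Gb') as [L' [b2' [BL' [B2' BZ']]]].
  rewrite BL in BL'; apply Fin_inj in BL'; subst L'.
  rewrite Hp in B2; apply Fin_inj in B2; subst b2.
  rewrite Hp' in B2'; apply Fin_inj in B2'; subst b2'.
  assert (HL : 0 < L) by (apply (dL_pos HdL y0 x); auto).
  assert (Hpp : 0 < p).
  { apply (dL_pos HdL x y); auto. intros <-. apply Nz; symmetry; apply Ib, Gz. }
  assert (C := ray_nonbranching HdL Hgeod Hnb y0 x y y' L p p' BL HL Hp Hp' Hpp Hle BZ BZ').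
  destruct (Grel_split HdL Gam x y' y p (p' - p) Gb' Hp ltac:(rewrite (dL_sym HdL); auto)
    ltac:(rewrite Hp'; f_equal; lra)) as [_ G].
  symmetry; apply Ib, G.
Qed.

Lemma endpoints_unique x : Tset dL Gam x ->
  (forall y y', aset dL Gam x y -> aset dL Gam x y' -> y = y') /\
  (forall y y', bset dL Gam x y -> bset dL Gam x y' -> y = y').
Proof.
  intros HT; split; intros y y' H1 H2.
  - destruct (Grel_dist Gam y x (proj1 H1)) as [_ [_ [_ [p [_ [_ [_ [Ep _]]]]]]]].
    destruct (Grel_dist Gam y' x (proj1 H2)) as [_ [_ [_ [p' [_ [_ [_ [Ep' _]]]]]]]].
    rewrite (dL_sym HdL) in Ep, Ep'.
    destruct (Rle_dec p p') as [h|h].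
    + apply (aset_unique_le x y y' p p'); auto.
    + symmetry; apply (aset_unique_le x y' y p' p); auto; lra.
  - destruct (Grel_dist Gam x y (proj1 H1)) as [_ [_ [_ [p [_ [_ [_ [Ep _]]]]]]]].
    destruct (Grel_dist Gam x y' (proj1 H2)) as [_ [_ [_ [p' [_ [_ [_ [Ep' _]]]]]]]].
    destruct (Rle_dec p p') as [h|h].
    + apply (bset_unique_le x y y' p p'); auto.
    + symmetry; apply (bset_unique_le x y' y p' p); auto; lra.
Qed.
End EndpointUniqueness.

Theorem proposition3p11
  (X : Type) (d : X -> X -> R) (dL : X -> X -> ER)
  (Hpolish : polish d)
  (HdL : is_ext_distance dL)
  (HdLborel : borel_ext_fun d dL)
  (Hgeod : geodesic_space dL)
  (Hnb : non_branching dL)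
  (Hcont : geodesics_d_continuous d dL)
  (Hloc : geodesics_locally_compact d dL)
  (mu nu : (X -> Prop) -> R) (pi : (X * X -> Prop) -> R)
  (Hmu : is_prob_measure (borel d) mu)
  (Hnu : is_prob_measure (borel d) nu)
  (Hpi : is_prob_measure (borel (pdist d)) pi)
  (Hcoup : is_coupling d mu nu pi)
  (Hcost : finite_cost d dL pi)
  (Gam : X * X -> Prop)
  (Hconc : concentrated_on d pi Gam)
  (HGsc : sigma_compact (pdist d) Gam)
  (HGcm : cyclically_monotone dL Gam)
  (HGfin : forall p, Gam p -> dL (fst p) (snd p) <> PInf) :
  let a := aset dL Gam in
  let b := bset dL Gam in
  let T := Tset dL Gam in
  let Te := Teset dL Gam in
  (* (1) *)
  (sigma_analytic (pdist d) (fun p => a (fst p) (snd p)) /\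
   sigma_analytic (pdist d) (fun p => b (fst p) (snd p)) /\
   forall A : X -> Prop, analytic d A ->
     sigma_analytic d (rimg a A) /\ sigma_analytic d (rimg b A)) /\
  (* (2) *)
  (forall x y, a x y -> b x y -> Te x -> False) /\
  (* (3) *)
  (forall x, T x ->
     (forall y y', a x y -> a x y' -> y = y') /\
     (forall y y', b x y -> b x y' -> y = y')) /\
  (* (4) *)
  (forall y, rimg a T y <-> rimg a Te y) /\
  (forall y, rimg b T y <-> rimg b Te y) /\
  (* (5) *)
  (forall x, Te x <-> T x \/ rimg a T x \/ rimg b T x) /\
  (forall x, T x -> ~ (rimg a T x \/ rimg b T x)).
Proof.
  intros a b T Te.
  destruct (aset_sigma_analytic Hpolish HdLborel HGsc) as [Ha HaA].
  destruct (bset_sigma_analytic Hpolish HdLborel HGsc) as [Hb HbA].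
  split; [split; [exact Ha|split; [exact Hb|intros A HA; split; auto]]|].
  split; [apply (aset_bset_disjoint_Te HdL Gam)|].
  split; [apply (endpoints_unique HdL Hgeod Hnb Gam HGcm HGfin)|].
  split; [apply (aset_image_T_Te HdL Gam Hgeod)|].
  split; [apply (bset_image_T_Te HdL Gam Hgeod)|].
  split; [apply (Te_decomposition HdL Gam Hgeod)|].
  apply T_disjoint_endpoints.
Qed.
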